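(* Let $\mathcal{T}_h$ be a triangulation, $\bm{z}$ a vertex, $\omega_z$ the union of triangles of $\mathcal{T}_h$ having $\bm{z}$ as a vertex, $r\ge0$, and $\bm{q}_z\in\mathcal{P}_{r+1}(\omega_z)^2$. Assume $\Pi_h^r\bm{q}_z=0$ on $\omega_z$. Then $\bm{q}_z=\nabla^\perp w$ for some $w\in\mathcal{P}_{r+2}(\omega_z)$ such that, for every edge $e$ of a triangle in $\omega_z$, $w(\bm{l})=0$ at every Lobatto quadrature point $\bm{l}$ on $e$.
   Context: $\nabla^\perp v=(-\partial_{x_2}v,\partial_{x_1}v)^\intercal$. $\Pi_h^r$ is the canonical Raviart--Thomas interpolant of order $r$: on each triangle $T$, $\Pi_h^r\bm{q}\in\mathcal{RT}_r(T)=\{(v_1,v_2)^\intercal+v_3(x_1,x_2)^\intercal:v_i\in\mathcal{P}_r(T)\}$ with $\int_e(\bm{q}-\Pi_h^r\bm{q})\cdot\bm{n}_ev=0$ for all $v\in\mathcal{P}_r(e)$ on each edge $e$ of $T$ and $\int_T(\bm{q}-\Pi_h^r\bm{q})\cdot\bm{v}=0$ for all $\bm{v}\in\mathcal{P}_{r-1}(T)^2$. The Lobatto points on an edge $e=\overline{\bm{a}\bm{b}}$ are $\bm{l}_j=\bm{a}+(\bm{b}-\bm{a})\hat l_j$, $j=1,\dots,r+2$, where $\hat l_j$ are the zeros of $\frac{d^r}{ds^r}\big(s^{r+1}(1-s)^{r+1}\big)$ (they include the endpoints). *)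

From Stdlib Require Import Reals List.
From Coquelicot Require Import Coquelicot.
Open Scope R_scope.

Definition pt := (R * R)%type.
Definition padd (p q : pt) : pt := (fst p + fst q, snd p + snd q).
Definition psub (p q : pt) : pt := (fst p - fst q, snd p - snd q).
Definition pscal (s : R) (p : pt) : pt := (s * fst p, s * snd p).
Definition pdot (p q : pt) : R := fst p * fst q + snd p * snd q.
Definition pnorm (p : pt) : R := sqrt (pdot p p).

Definition is_poly2 (k : nat) (f : pt -> R) : Prop :=
  exists c : nat -> nat -> R, forall x : pt,
    f x = sum_f_R0 (fun i => sum_f_R0 (fun j =>
            c i j * fst x ^ i * snd x ^ j) (k - i)) k.

Definition is_poly2_vec (k : nat) (q : pt -> pt) : Prop :=
  is_poly2 k (fun x => fst (q x)) /\ is_poly2 k (fun x => snd (q x)).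

Definition gradperp (w : pt -> R) (x : pt) : pt :=
  (- Derive (fun t => w (fst x, t)) (snd x),
     Derive (fun t => w (t, snd x)) (fst x)).

Definition tri2 := (pt * pt * pt)%type.
Definition tv1 (T : tri2) : pt := fst (fst T).
Definition tv2 (T : tri2) : pt := snd (fst T).
Definition tv3 (T : tri2) : pt := snd T.

Definition tdet (T : tri2) : R :=
  let u := psub (tv2 T) (tv1 T) in let v := psub (tv3 T) (tv1 T) in
  fst u * snd v - snd u * fst v.

Definition nondegenerate (T : tri2) : Prop := tdet T <> 0.

Definition is_vertex (z : pt) (T : tri2) : Prop :=
  z = tv1 T \/ z = tv2 T \/ z = tv3 T.

Definition in_tri (T : tri2) (p : pt) : Prop :=
  exists l1 l2 l3 : R, 0 <= l1 /\ 0 <= l2 /\ 0 <= l3 /\ l1 + l2 + l3 = 1 /\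
    p = padd (pscal l1 (tv1 T)) (padd (pscal l2 (tv2 T)) (pscal l3 (tv3 T))).

Definition in_seg (a b p : pt) : Prop :=
  exists s : R, 0 <= s <= 1 /\ p = padd a (pscal s (psub b a)).

Definition is_edge (T : tri2) (a b : pt) : Prop :=
  (a = tv1 T /\ b = tv2 T) \/ (a = tv2 T /\ b = tv3 T) \/ (a = tv3 T /\ b = tv1 T).

Definition triangulation (Th : list tri2) : Prop :=
  (forall T, In T Th -> nondegenerate T) /\
  (forall T T', In T Th -> In T' Th -> T <> T' ->
     (forall p, ~ (in_tri T p /\ in_tri T' p)) \/
     (exists v, is_vertex v T /\ is_vertex v T' /\
        forall p, (in_tri T p /\ in_tri T' p) <-> p = v) \/
     (exists u v, u <> v /\ is_vertex u T /\ is_vertex u T' /\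
        is_vertex v T /\ is_vertex v T' /\
        forall p, (in_tri T p /\ in_tri T' p) <-> in_seg u v p)).

(* Integral over the edge [a,b] (arc-length measure). *)
Definition edge_int (a b : pt) (g : pt -> R) : R :=
  pnorm (psub b a) * RInt (fun s => g (padd a (pscal s (psub b a)))) 0 1.

(* Integral over the tri2 T (change of variables to the reference tri2). *)
Definition tri_int (T : tri2) (g : pt -> R) : R :=
  Rabs (tdet T) *
  RInt (fun s => RInt (fun t =>
     g (padd (tv1 T) (padd (pscal s (psub (tv2 T) (tv1 T)))
                           (pscal t (psub (tv3 T) (tv1 T)))))) 0 (1 - s)) 0 1.

Definition edge_normal (a b : pt) : pt :=
  let d := psub b a in pscal (/ pnorm d) (snd d, - fst d).

Definition in_RT (r : nat) (p : pt -> pt) : Prop :=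
  exists v1 v2 v3 : pt -> R, is_poly2 r v1 /\ is_poly2 r v2 /\ is_poly2 r v3 /\
    forall x, p x = (v1 x + v3 x * fst x, v2 x + v3 x * snd x).

Definition is_RT_interp (r : nat) (T : tri2) (q p : pt -> pt) : Prop :=
  in_RT r p /\
  (forall a b, is_edge T a b -> forall v : pt -> R, is_poly2 r v ->
     edge_int a b (fun x => pdot (psub (q x) (p x)) (edge_normal a b) * v x) = 0) /\
  (match r with
   | O => True
   | S r' => forall v : pt -> pt, is_poly2_vec r' v ->
       tri_int T (fun x => pdot (psub (q x) (p x)) (v x)) = 0
   end).

(* the polynomial whose zeros are the reference Lobatto points *)
Definition lobatto_poly (r : nat) (s : R) : R :=
  Derive_n (fun s => s ^ (r + 1) * (1 - s) ^ (r + 1)) r s.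

Definition lobatto_point (r : nat) (a b l : pt) : Prop :=
  exists s : R, lobatto_poly r s = 0 /\ l = padd a (pscal s (psub b a)).

From Stdlib Require Import Reals List Lra Lia FunctionalExtensionality.
From Coquelicot Require Import Coquelicot.
Open Scope R_scope.

(* Since Pi q = 0, all edge and interior moments of q vanish, and this makes q
   divergence free: with d := div q in P_r, integrating div (d q) = d^2 + grad d . q
   over a triangle T of the patch gives int_T d^2 = 0, hence d = 0 since d is a
   polynomial.  So q = rot w for a stream function w in P_{r+2}, unique up to a
   constant.  Along an edge [a,b], q.n is the tangential derivative of w, so the
   edge moments say that s |-> w(a + s(b - a)) has a derivative orthogonal to P_r
   on [0,1]; a polynomial of degree r+2 with this property is w(a) + c L(s), where
   L = (s^{r+1} (1-s)^{r+1})^{(r)} is the Lobatto polynomial, which vanishes at 0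
   and 1.  Hence w takes the same value at both ends of every edge, and
   normalising w(z) = 0 makes w vanish at every vertex of the patch and at every
   Lobatto point of its edges. *)

(* Coquelicot states its calculus lemmas for abstract [plus]/[mult]/[scal];
   these instances at type [R] are usable by [apply] on real expressions. *)

Lemma is_derive_Rplus (f g : R -> R) x df dg :
  is_derive f x df -> is_derive g x dg -> is_derive (fun t => f t + g t) x (df + dg).
Proof. intros; now apply (is_derive_plus f g). Qed.

Lemma is_derive_Rminus (f g : R -> R) x df dg :
  is_derive f x df -> is_derive g x dg -> is_derive (fun t => f t - g t) x (df - dg).
Proof. intros; now apply (is_derive_minus f g). Qed.

Lemma is_derive_Rmult (f g : R -> R) x df dg :
  is_derive f x df -> is_derive g x dg ->
  is_derive (fun t => f t * g t) x (df * g x + f x * dg).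
Proof. intros; apply (is_derive_mult f g); auto. intros; apply Rmult_comm. Qed.

Lemma is_derive_Rconst (c x : R) : is_derive (fun _ => c) x 0.
Proof. apply (is_derive_const c). Qed.

Lemma is_derive_Rid (x : R) : is_derive (fun t => t) x 1.
Proof. apply (is_derive_id x). Qed.

Lemma is_derive_eq (f g : R -> R) (x l l' : R) :
  (forall t, f t = g t) -> l = l' -> is_derive f x l -> is_derive g x l'.
Proof. intros H <- D; now apply (is_derive_ext f g). Qed.

Lemma is_derive_unique_R (f : R -> R) x l1 l2 : is_derive f x l1 -> is_derive f x l2 -> l1 = l2.
Proof. intros H1 H2. rewrite <- (is_derive_unique _ _ _ H1). now apply is_derive_unique. Qed.

Lemma is_derive_affine (a b x : R) : is_derive (fun s => a + b * s) x b.
Proof.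
  apply (is_derive_eq (fun s => a + b * s) _ x (0 + b * 1)); [reflexivity | ring |].
  apply is_derive_Rplus; [apply is_derive_Rconst | apply is_derive_scal, is_derive_Rid].
Qed.

Lemma RInt_Rplus (f g : R -> R) a b : ex_RInt f a b -> ex_RInt g a b ->
  RInt (fun x => f x + g x) a b = RInt f a b + RInt g a b.
Proof. intros; now apply (RInt_plus f g). Qed.

Lemma RInt_Rminus (f g : R -> R) a b : ex_RInt f a b -> ex_RInt g a b ->
  RInt (fun x => f x - g x) a b = RInt f a b - RInt g a b.
Proof. intros; now apply (RInt_minus f g). Qed.

Lemma RInt_Rscal (f : R -> R) a b c : ex_RInt f a b ->
  RInt (fun x => c * f x) a b = c * RInt f a b.
Proof. intros; now apply (RInt_scal f). Qed.

Lemma RInt_ext_R (f g : R -> R) a b : (forall x, f x = g x) -> RInt f a b = RInt g a b.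
Proof. intros H. apply RInt_ext. intros; apply H. Qed.

Lemma RInt_Rzero a b : RInt (fun _ => 0) a b = 0.
Proof. rewrite RInt_const. apply Rmult_0_r. Qed.

Lemma ex_RInt_Rplus (f g : R -> R) a b :
  ex_RInt f a b -> ex_RInt g a b -> ex_RInt (fun t => f t + g t) a b.
Proof. apply (ex_RInt_plus (V := R_CompleteNormedModule) f g). Qed.

Lemma ex_RInt_Rcontinuous (f : R -> R) a b : (forall x, continuous f x) -> ex_RInt f a b.
Proof. intros; apply (ex_RInt_continuous (V := R_CompleteNormedModule)); auto. Qed.

Lemma RInt_Rderive (f df : R -> R) a b :
  (forall x, is_derive f x (df x)) -> (forall x, continuous df x) ->
  RInt df a b = f b - f a.
Proof. intros H1 H2. apply is_RInt_unique, (is_RInt_derive f df); auto. Qed.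

Lemma is_derive_zero_const (f : R -> R) : (forall x, is_derive f x 0) -> forall x, f x = f 0.
Proof.
  intros Df x. assert (E := RInt_Rderive f (fun _ => 0) 0 x Df (continuous_const 0)).
  rewrite RInt_Rzero in E. lra.
Qed.

(* [RInt] returns an element of Coquelicot's module carrier; [ring] and [lra]
   need the equation at type [R]. *)
Ltac R_eq := match goal with |- ?a = ?b => change (@eq R a b) end.

Lemma RInt_nonneg_eq0 (f : R -> R) a b : a < b -> (forall x, continuous f x) ->
  (forall x, a <= x <= b -> 0 <= f x) -> RInt f a b = 0 ->
  forall x, a <= x <= b -> f x = 0.
Proof.
  intros Hab Hc Hp HI x Hx.
  destruct (Rle_lt_or_eq_dec 0 (f x) (Hp x Hx)) as [Hlt|Heq]; [|auto].
  exfalso.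
  destruct (Hc x (fun y => 0 < y) (open_gt 0 _ Hlt)) as [eps He].
  pose proof (cond_pos eps) as Ep.
  set (c := Rmax a (x - eps/2)). set (e := Rmin b (x + eps/2)).
  assert (Hc1 : a <= c <= b) by (unfold c, Rmax; destruct Rle_dec; lra).
  assert (He1 : a <= e <= b) by (unfold e, Rmin; destruct Rle_dec; lra).
  assert (Hce : c < e) by (unfold c, e, Rmax, Rmin; destruct Rle_dec; destruct Rle_dec; lra).
  assert (EX : forall u v, ex_RInt f u v) by (intros; apply ex_RInt_Rcontinuous; auto).
  rewrite <- (RInt_Chasles f a c b), <- (RInt_Chasles f c e b) in HI by auto.
  change (RInt f a c + (RInt f c e + RInt f e b) = 0) in HI.
  assert (0 <= RInt f a c) by (apply RInt_ge_0; auto; [lra | intros; apply Hp; lra]).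
  assert (0 <= RInt f e b) by (apply RInt_ge_0; auto; [lra | intros; apply Hp; lra]).
  assert (0 < RInt f c e).
  { apply RInt_gt_0; auto. intros y Hy. apply He. change (Rabs (y - x) < eps).
    apply Rabs_def1; unfold c, e, Rmax, Rmin in Hy; destruct Rle_dec; destruct Rle_dec; lra. }
  lra.
Qed.

(** * Univariate polynomials *)

Inductive upoly : nat -> (R -> R) -> Prop :=
| upoly_const k c : upoly k (fun _ => c)
| upoly_mulX k f : upoly k f -> upoly (S k) (fun s => s * f s)
| upoly_add k f g : upoly k f -> upoly k g -> upoly k (fun s => f s + g s).

Definition upoly_lt k g := match k with O => forall x, g x = 0 | S m => upoly m g end.

Lemma upoly_ext k f g : upoly k f -> (forall x, f x = g x) -> upoly k g.
Proof. intros H E. replace g with f; auto. now apply functional_extensionality. Qed.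

Lemma upoly_S k f : upoly k f -> upoly (S k) f.
Proof. induction 1; [apply upoly_const | now apply upoly_mulX | now apply upoly_add]. Qed.

Lemma upoly_le k k' f : (k <= k')%nat -> upoly k f -> upoly k' f.
Proof. induction 1; auto. intros; apply upoly_S; auto. Qed.

Lemma upoly_lt_upoly k g : upoly_lt k g -> upoly k g.
Proof.
  destruct k; simpl; intros H; [|now apply upoly_S].
  eapply upoly_ext; [apply (upoly_const 0 0) | intros; now rewrite H].
Qed.

Lemma upoly_scal k c f : upoly k f -> upoly k (fun s => c * f s).
Proof.
  induction 1.
  - apply upoly_const.
  - eapply upoly_ext; [apply upoly_mulX, IHupoly | intros; simpl; ring].
  - eapply upoly_ext; [apply upoly_add; [apply IHupoly1 | apply IHupoly2] | intros; simpl; ring].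
Qed.

Lemma upoly_sub k f g : upoly k f -> upoly k g -> upoly k (fun s => f s - g s).
Proof.
  intros Hf Hg. eapply upoly_ext; [apply upoly_add; [apply Hf | apply (upoly_scal _ (-1)), Hg] |].
  intros; simpl; ring.
Qed.

Lemma upoly_mult m n f g : upoly m f -> upoly n g -> upoly (m + n) (fun s => f s * g s).
Proof.
  intros H; revert n g. induction H; intros n h Hg.
  - apply (upoly_le n); [lia | now apply upoly_scal].
  - eapply upoly_ext; [apply upoly_mulX, IHupoly, Hg | intros; simpl; ring].
  - eapply upoly_ext; [apply upoly_add; [apply IHupoly1 | apply IHupoly2]; exact Hg |].
    intros; simpl; ring.
Qed.

Lemma upoly_pow n : upoly n (fun s => s ^ n).
Proof. induction n; [exact (upoly_const 0 1) | now apply upoly_mulX]. Qed.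

Lemma upoly_affine a b : upoly 1 (fun s => a + b * s).
Proof.
  eapply upoly_ext; [apply upoly_add; [apply (upoly_const 1 a) |] |].
  - apply (upoly_scal _ b), (upoly_mulX 0 (fun _ => 1)), upoly_const.
  - intros; simpl; ring.
Qed.

Lemma upoly_comp_affine k f a b : upoly k f -> upoly k (fun s => f (a + b * s)).
Proof.
  induction 1.
  - apply upoly_const.
  - apply (upoly_mult 1 k (fun s => a + b * s)); [apply upoly_affine | auto].
  - apply upoly_add; auto.
Qed.

Lemma upoly_one_minus_pow n : upoly n (fun s => (1 - s) ^ n).
Proof.
  eapply upoly_ext; [apply (upoly_comp_affine _ (fun s => s ^ n) 1 (-1)), upoly_pow |].
  intros; simpl; f_equal; ring.
Qed.

Lemma upoly_derive k f : upoly k f -> exists f1, upoly_lt k f1 /\ forall x, is_derive f x (f1 x).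
Proof.
  induction 1.
  - exists (fun _ => 0). split; [destruct k; simpl; auto; apply upoly_const |].
    intros; apply is_derive_Rconst.
  - destruct IHupoly as [f1 [H1 H2]]. exists (fun s => f s + s * f1 s). split.
    + simpl. destruct k.
      * eapply upoly_ext; [apply H | intros; simpl in H1; rewrite H1; ring].
      * apply upoly_add; [exact H | now apply upoly_mulX].
    + intros x. apply (is_derive_eq (fun s => s * f s) _ x (1 * f x + x * f1 x));
        [reflexivity | ring | apply is_derive_Rmult; [apply is_derive_Rid | apply H2]].
  - destruct IHupoly1 as [f1 [H1 H2]], IHupoly2 as [g1 [H3 H4]].
    exists (fun s => f1 s + g1 s). split.
    + destruct k; simpl in *; [intros; rewrite H1, H3; ring | now apply upoly_add].
    + intros; now apply is_derive_Rplus.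
Qed.

Lemma upoly_derive_upoly k f f1 : upoly (S k) f -> (forall x, is_derive f x (f1 x)) -> upoly k f1.
Proof.
  intros Hf Df. destruct (upoly_derive _ _ Hf) as [g [Hg Dg]]. eapply upoly_ext; [apply Hg |].
  intros x. rewrite <- (is_derive_unique _ _ _ (Dg x)). now apply is_derive_unique.
Qed.

Lemma upoly_ex_derive k f x : upoly k f -> ex_derive f x.
Proof. intros H. destruct (upoly_derive k f H) as [f1 [_ H2]]. eexists; apply H2. Qed.

Lemma upoly_continuous k f x : upoly k f -> continuous f x.
Proof.
  intros H. apply (ex_derive_continuous (K := R_AbsRing) (V := R_NormedModule)).
  eapply upoly_ex_derive; eauto.
Qed.

Lemma upoly_ex_RInt k f a b : upoly k f -> ex_RInt f a b.
Proof. intros H. apply ex_RInt_Rcontinuous. intros; eapply upoly_continuous; eauto. Qed.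

Lemma upoly_Derive_n n : forall k f, upoly k f -> upoly (k - n) (Derive_n f n).
Proof.
  induction n; intros k f H.
  - rewrite Nat.sub_0_r. exact H.
  - destruct (upoly_derive _ _ (IHn k f H)) as [g1 [G1 G2]].
    assert (E : forall x, Derive_n f (S n) x = g1 x) by (intros x; now apply is_derive_unique).
    destruct (k - n)%nat eqn:Ekn; simpl in G1.
    + replace (k - S n)%nat with 0%nat by lia.
      eapply upoly_ext; [apply (upoly_const 0 0) | intros; rewrite E; auto].
    + replace (k - S n)%nat with n0 by lia. eapply upoly_ext; [exact G1 | auto].
Qed.

Lemma upoly_ex_derive_n k f n x : upoly k f -> ex_derive_n f n x.
Proof. intros H. destruct n; simpl; auto. eapply upoly_ex_derive, (upoly_Derive_n n k f H). Qed.

Lemma upoly0_const f : upoly 0 f -> exists c, forall x, f x = c.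
Proof.
  intros H. remember 0%nat as k. induction H; [eauto | discriminate |].
  destruct (IHupoly1 Heqk) as [c1 E1], (IHupoly2 Heqk) as [c2 E2].
  exists (c1 + c2); intros; rewrite E1, E2; auto.
Qed.

Lemma upoly_lead k f : upoly k f -> exists c, upoly_lt k (fun s => f s - c * s ^ k).
Proof.
  induction 1.
  - destruct k; [exists c; simpl; intros; ring |].
    exists 0. eapply upoly_ext; [apply (upoly_const k c) | intros; simpl; ring].
  - destruct IHupoly as [c Hc]. exists c. simpl. destruct k; simpl in Hc.
    + eapply upoly_ext; [apply (upoly_const 0 0) |].
      intros x. specialize (Hc x). simpl in Hc. replace (f x) with c by lra. ring.
    + eapply upoly_ext; [apply upoly_mulX, Hc | intros; simpl; ring].
  - destruct IHupoly1 as [c1 H1], IHupoly2 as [c2 H2]. exists (c1 + c2). destruct k; simpl in *.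
    + intros x; specialize (H1 x); specialize (H2 x). lra.
    + eapply upoly_ext; [apply upoly_add; [apply H1 | apply H2] | intros; simpl; ring].
Qed.

Lemma upoly_eq0 k f a b : upoly k f -> a < b -> (forall x, a < x < b -> f x = 0) ->
  forall x, f x = 0.
Proof.
  revert f. induction k; intros f Hf Hab Hz x.
  - destruct (upoly0_const f Hf) as [c Hc]. rewrite Hc, <- (Hc ((a + b) / 2)). apply Hz. lra.
  - destruct (upoly_derive _ _ Hf) as [f1 [H1 H2]]. simpl in H1.
    assert (Z1 : forall y, f1 y = 0).
    { apply (IHk f1 H1 Hab). intros y Hy.
      rewrite <- (is_derive_unique f y _ (H2 y)). apply is_derive_unique.
      apply (is_derive_ext_loc (fun _ => 0)); [| apply is_derive_Rconst].
      generalize (open_and _ _ (open_gt a) (open_lt b) y Hy).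
      apply filter_imp. intros; symmetry; auto. }
    assert (D : forall y, is_derive f y 0) by (intros y; rewrite <- (Z1 y); apply H2).
    rewrite (is_derive_zero_const f D x), <- (is_derive_zero_const f D ((a + b) / 2)).
    apply Hz. lra.
Qed.

Lemma upoly_orth_eq0 k g : upoly k g ->
  (forall m, (m <= k)%nat -> RInt (fun s => g s * s ^ m) 0 1 = 0) -> forall x, g x = 0.
Proof.
  intros Hg Horth.
  assert (Ex : forall n v, upoly n v -> ex_RInt (fun s => g s * v s) 0 1)
    by (intros; eapply upoly_ex_RInt, upoly_mult; eauto).
  assert (Hv : forall n v, upoly n v -> forall m, (m + n <= k)%nat ->
            RInt (fun s => g s * (s ^ m * v s)) 0 1 = 0).
  { induction 1 as [n c|n f Hf IH|n f h Hf IHf Hh IHh]; intros m Hm.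
    - rewrite (RInt_ext_R _ (fun s => c * (g s * s ^ m))) by (intros; ring).
      rewrite RInt_Rscal, Horth by (try lia; eapply Ex, upoly_pow). R_eq; ring.
    - rewrite (RInt_ext_R _ (fun s => g s * (s ^ S m * f s))) by (intros; simpl; ring).
      apply IH. lia.
    - rewrite (RInt_ext_R _ (fun s => g s * (s ^ m * f s) + g s * (s ^ m * h s))) by (intros; ring).
      rewrite RInt_Rplus, IHf, IHh; try lia; [R_eq; ring | |];
        eapply Ex, upoly_mult; eauto using upoly_pow. }
  (* Being orthogonal to P_k, g is orthogonal to itself. *)
  assert (Hsq : forall x, 0 <= x <= 1 -> g x * g x = 0).
  { intros x Hx.
    assert (E := RInt_nonneg_eq0 (fun s => g s * (s ^ 0 * g s)) 0 1).
    simpl in E. rewrite <- (Rmult_1_l (g x)) at 2. apply E; auto; try lra.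
    - intros; apply (upoly_continuous (k + (0 + k))), upoly_mult, upoly_mult; auto using upoly_pow.
    - intros; nra.
    - apply (Hv k g Hg 0%nat). lia. }
  apply (upoly_eq0 k g 0 1 Hg); [lra |]. intros x Hx. specialize (Hsq x). nra.
Qed.

(** * Lobatto polynomials *)

Definition rodrigues (r : nat) (s : R) : R := s ^ (r + 1) * (1 - s) ^ (r + 1).

Lemma upoly_rodrigues r : upoly ((r + 1) + (r + 1)) (rodrigues r).
Proof. apply upoly_mult; [apply upoly_pow | apply upoly_one_minus_pow]. Qed.

Lemma Derive_n_pow_mult n : forall m g kg al be, (n <= m)%nat -> upoly kg g ->
  exists h kh, upoly kh h /\
    forall x, Derive_n (fun s => (al + be * s) ^ m * g s) n x = (al + be * x) ^ (m - n) * h x.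
Proof.
  induction n; intros m g kg al be Hnm Hg.
  - exists g, kg. split; auto. intros; simpl; rewrite Nat.sub_0_r; reflexivity.
  - destruct (IHn m g kg al be) as [h [kh [Hh E]]]; [lia | auto |].
    destruct (upoly_derive _ _ Hh) as [h1 [Hh1 Dh]]. apply upoly_lt_upoly in Hh1.
    destruct (m - n)%nat as [|p] eqn:Emn; [lia |].
    replace (m - S n)%nat with p by lia.
    exists (fun x => INR (S p) * be * h x + (al + be * x) * h1 x), (S kh). split.
    + apply upoly_add; [apply upoly_S, upoly_scal, Hh |].
      apply (upoly_mult 1 kh (fun x => al + be * x)); [apply upoly_affine | auto].
    + intros x. simpl.
      rewrite (Derive_ext _ (fun x => (al + be * x) ^ (S p) * h x)) by apply E.
      apply is_derive_unique.
      eapply is_derive_eq; [reflexivity | | apply is_derive_Rmult; [| apply Dh]].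
      2: apply is_derive_pow, is_derive_affine.
      simpl. ring.
Qed.

Lemma rodrigues_Derive_n_boundary r j : (j < r + 1)%nat ->
  Derive_n (rodrigues r) j 0 = 0 /\ Derive_n (rodrigues r) j 1 = 0.
Proof.
  intros Hj. split.
  - rewrite (Derive_n_ext _ (fun s => (0 + 1 * s) ^ (r + 1) * (1 - s) ^ (r + 1))) by
      (intros; unfold rodrigues; f_equal; f_equal; ring).
    destruct (Derive_n_pow_mult j (r + 1) _ _ 0 1 ltac:(lia) (upoly_one_minus_pow (r + 1)))
      as [h [kh [_ ->]]].
    destruct (r + 1 - j)%nat eqn:E; [lia | simpl; ring].
  - rewrite (Derive_n_ext _ (fun s => (1 + -1 * s) ^ (r + 1) * s ^ (r + 1))) by
      (intros; unfold rodrigues; rewrite Rmult_comm; f_equal; f_equal; ring).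
    destruct (Derive_n_pow_mult j (r + 1) _ _ 1 (-1) ltac:(lia) (upoly_pow (r + 1)))
      as [h [kh [_ ->]]].
    destruct (r + 1 - j)%nat eqn:E; [lia | simpl; ring].
Qed.

Lemma lobatto_poly_0 r : lobatto_poly r 0 = 0.
Proof. apply (rodrigues_Derive_n_boundary r r). lia. Qed.

Lemma lobatto_poly_1 r : lobatto_poly r 1 = 0.
Proof. apply (rodrigues_Derive_n_boundary r r). lia. Qed.

Lemma one_minus_pow_lead n :
  exists h, upoly_lt n h /\ forall s, (1 - s) ^ n = (-1) ^ n * s ^ n + h s.
Proof.
  induction n as [|n [h [Hh E]]].
  - exists (fun _ => 0). split; [simpl; auto | intros; simpl; ring].
  - exists (fun s => (-1) ^ n * s ^ n + (1 - s) * h s). split.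
    + simpl. apply upoly_add; [apply upoly_scal, upoly_pow |].
      destruct n.
      * eapply upoly_ext; [apply (upoly_const 0 0) | intros; simpl in Hh; rewrite Hh; ring].
      * apply (upoly_mult 1 n (fun s => 1 - s)); [| exact Hh].
        eapply upoly_ext; [apply (upoly_affine 1 (-1)) | intros; simpl; ring].
    + intros s. simpl. rewrite E. ring.
Qed.

Lemma lobatto_poly_lead r : exists l h, l <> 0 /\ upoly (r + 1) h /\
  forall s, lobatto_poly r s = l * s ^ (r + 2) + h s.
Proof.
  destruct (one_minus_pow_lead (r + 1)) as [h [Hh E]].
  replace (r + 1)%nat with (S r) in Hh by lia. simpl in Hh.
  set (N := ((r + 1) + (r + 1))%nat). set (c0 := (-1) ^ (r + 1)).
  set (hB := fun s => s ^ (r + 1) * h s).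
  assert (HB : upoly ((r + 1) + r) hB) by (apply upoly_mult; [apply upoly_pow | exact Hh]).
  assert (EB : forall s, rodrigues r s = c0 * s ^ N + hB s).
  { intros s. unfold rodrigues, hB, c0, N. rewrite E, (pow_add s (r + 1) (r + 1)). ring. }
  exists (c0 * (INR (Factorial.fact N) / INR (Factorial.fact (N - r)))), (Derive_n hB r).
  split; [|split].
  - apply Rmult_integral_contrapositive_currified; [apply pow_nonzero; lra |].
    apply Rmult_integral_contrapositive_currified;
      [apply INR_fact_neq_0 | apply Rinv_neq_0_compat, INR_fact_neq_0].
  - replace (r + 1)%nat with ((r + 1 + r) - r)%nat by lia. apply upoly_Derive_n, HB.
  - intros s. unfold lobatto_poly. fold (rodrigues r).
    rewrite (Derive_n_ext _ (fun x => c0 * x ^ N + hB x)) by apply EB.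
    rewrite (Derive_n_plus (fun x => c0 * x ^ N) hB).
    + rewrite Derive_n_scal_l, Derive_n_pow_smalli by (unfold N; lia).
      replace (N - r)%nat with (r + 2)%nat by (unfold N; lia). ring.
    + apply filter_forall. intros; eapply upoly_ex_derive_n, upoly_scal, (upoly_pow N).
    + apply filter_forall. intros; eapply upoly_ex_derive_n, HB.
Qed.

Lemma is_derive_Derive_n_rodrigues r j x :
  is_derive (Derive_n (rodrigues r) j) x (Derive_n (rodrigues r) (S j) x).
Proof. apply Derive_correct. eapply upoly_ex_derive, (upoly_Derive_n j _ _ (upoly_rodrigues r)). Qed.

Lemma upoly_Derive_n_rodrigues_mult r j m :
  upoly ((r + 1 + (r + 1) - j) + m) (fun s => Derive_n (rodrigues r) j s * s ^ m).
Proof. apply upoly_mult; [apply upoly_Derive_n, upoly_rodrigues | apply upoly_pow]. Qed.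

(* Integrate by parts, lowering m; the boundary terms vanish by
   [rodrigues_Derive_n_boundary]. *)
Lemma rodrigues_Derive_n_orth r m : forall j, (m < j)%nat -> (j <= r + 1)%nat ->
  RInt (fun s => Derive_n (rodrigues r) j s * s ^ m) 0 1 = 0.
Proof.
  induction m; intros j Hmj Hjr; (destruct j as [|j]; [lia|]);
    destruct (rodrigues_Derive_n_boundary r j) as [V0 V1]; try lia.
  - rewrite (RInt_ext_R _ (Derive_n (rodrigues r) (S j))) by (intros; simpl; ring).
    rewrite (RInt_Rderive (Derive_n (rodrigues r) j)), V0, V1; [R_eq; ring | |].
    + intros; apply is_derive_Derive_n_rodrigues.
    + intros; eapply upoly_continuous, upoly_Derive_n, upoly_rodrigues.
  - assert (E : RInt (fun s => Derive_n (rodrigues r) (S j) s * s ^ (S m) +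
                   INR (S m) * (Derive_n (rodrigues r) j s * s ^ m)) 0 1 = 0).
    { rewrite (RInt_Rderive (fun s => Derive_n (rodrigues r) j s * s ^ (S m))), V0, V1;
        [R_eq; simpl; ring | |].
      - intros x. eapply is_derive_eq; [reflexivity | |
          apply is_derive_Rmult; [apply is_derive_Derive_n_rodrigues |
                                  apply is_derive_pow, is_derive_Rid]].
        simpl. ring.
      - intros x. apply (upoly_continuous (2 * (r + 1) + S m)), upoly_add;
          [apply upoly_le with (2 := upoly_Derive_n_rodrigues_mult r (S j) (S m)) |
           apply upoly_le with (2 := upoly_scal _ (INR (S m)) _ (upoly_Derive_n_rodrigues_mult r j m))];
          lia. }
    rewrite RInt_Rplus, RInt_Rscal, IHm in E; try lia; [R_eq; lra | ..];
      eapply upoly_ex_RInt; eauto using upoly_Derive_n_rodrigues_mult, upoly_scal.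
Qed.

Lemma deriv_orth_lobatto r (phi phi1 : R -> R) : upoly (r + 2) phi ->
  (forall x, is_derive phi x (phi1 x)) ->
  (forall m, (m <= r)%nat -> RInt (fun s => phi1 s * s ^ m) 0 1 = 0) ->
  exists c, forall s, phi s = phi 0 + c * lobatto_poly r s.
Proof.
  intros Hp Dp Op.
  replace (r + 2)%nat with (S (S r)) in Hp by lia.
  destruct (upoly_lead _ _ Hp) as [e He].
  destruct (lobatto_poly_lead r) as [l [h [Hl [Hh EL]]]].
  replace (r + 2)%nat with (S (S r)) in EL by lia. replace (r + 1)%nat with (S r) in Hh by lia.
  exists (e / l).
  (* With matching leading coefficients, psi has degree r+1 and its derivative,
     of degree r, is orthogonal to P_r: it vanishes. *)
  set (psi := fun s => phi s - phi 0 - e / l * lobatto_poly r s).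
  set (psi1 := fun s => phi1 s - e / l * Derive_n (rodrigues r) (S r) s).
  assert (Hpsi : upoly (S r) psi).
  { eapply upoly_ext; [apply upoly_add; [apply upoly_add; [exact He | apply (upoly_const _ (- phi 0))] |
                                        apply (upoly_scal _ (- (e / l))), Hh] |].
    intros x. unfold psi. rewrite EL. field. auto. }
  assert (Dpsi : forall x, is_derive psi x (psi1 x)).
  { intros x. eapply is_derive_eq; [reflexivity | |
      apply is_derive_Rminus; [apply is_derive_Rminus; [apply Dp | apply is_derive_Rconst] |
                               apply is_derive_scal, is_derive_Derive_n_rodrigues]].
    unfold psi1. ring. }
  assert (Z : forall x, psi1 x = 0).
  { apply (upoly_orth_eq0 r psi1 (upoly_derive_upoly _ _ _ Hpsi Dpsi)). intros m Hm.
    assert (X1 := upoly_ex_RInt _ _ 0 1 (upoly_mult _ _ _ _ (upoly_derive_upoly _ _ _ Hp Dp) (upoly_pow m))).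
    assert (X2 := upoly_ex_RInt _ _ 0 1 (upoly_scal _ (e / l) _ (upoly_Derive_n_rodrigues_mult r (S r) m))).
    rewrite (RInt_ext_R _ (fun s => phi1 s * s ^ m - e / l * (Derive_n (rodrigues r) (S r) s * s ^ m)))
      by (intros; unfold psi1; ring).
    rewrite (RInt_Rminus _ _ _ _ X1 X2), RInt_Rscal, Op, rodrigues_Derive_n_orth by
      (auto; try lia; eapply upoly_ex_RInt, upoly_Derive_n_rodrigues_mult).
    R_eq; ring. }
  assert (D : forall x, is_derive psi x 0) by (intros x; rewrite <- (Z x); apply Dpsi).
  intros s. assert (E := is_derive_zero_const psi D s).
  unfold psi in E. rewrite lobatto_poly_0 in E. lra.
Qed.

(** * Bivariate polynomials *)

(* P_k(R^2) as an inductive predicate, equivalent to [is_poly2 k] by [bpoly_poly2]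
   and [poly2_bpoly] but suited to induction. *)
Inductive bpoly : nat -> (pt -> R) -> Prop :=
| bpoly_const k c : bpoly k (fun _ => c)
| bpoly_mulX k f : bpoly k f -> bpoly (S k) (fun p => fst p * f p)
| bpoly_mulY k f : bpoly k f -> bpoly (S k) (fun p => snd p * f p)
| bpoly_add k f g : bpoly k f -> bpoly k g -> bpoly k (fun p => f p + g p).

Definition bpoly_lt k g := match k with O => forall p, g p = 0 | S m => bpoly m g end.

Ltac pt_eq := cbv beta; cbn [fst snd];
  first [reflexivity | apply (f_equal2 pair); ring | f_equal; apply (f_equal2 pair); ring].

Lemma bpoly_ext k f g : bpoly k f -> (forall p, f p = g p) -> bpoly k g.
Proof. intros H E. replace g with f; auto. now apply functional_extensionality. Qed.

Lemma bpoly_S k f : bpoly k f -> bpoly (S k) f.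
Proof.
  induction 1; [apply bpoly_const | now apply bpoly_mulX | now apply bpoly_mulY | now apply bpoly_add].
Qed.

Lemma bpoly_le k k' f : (k <= k')%nat -> bpoly k f -> bpoly k' f.
Proof. induction 1; auto. intros; apply bpoly_S; auto. Qed.

Lemma bpoly_lt_bpoly k g : bpoly_lt k g -> bpoly k g.
Proof.
  destruct k; simpl; intros H; [|now apply bpoly_S].
  eapply bpoly_ext; [apply (bpoly_const 0 0) | intros; now rewrite H].
Qed.

Lemma bpoly_scal k c f : bpoly k f -> bpoly k (fun p => c * f p).
Proof.
  induction 1.
  - apply bpoly_const.
  - eapply bpoly_ext; [apply bpoly_mulX, IHbpoly | intros; simpl; ring].
  - eapply bpoly_ext; [apply bpoly_mulY, IHbpoly | intros; simpl; ring].
  - eapply bpoly_ext; [apply bpoly_add; [apply IHbpoly1 | apply IHbpoly2] | intros; simpl; ring].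
Qed.

Lemma bpoly_sub k f g : bpoly k f -> bpoly k g -> bpoly k (fun p => f p - g p).
Proof.
  intros Hf Hg. eapply bpoly_ext; [apply bpoly_add; [apply Hf | apply (bpoly_scal _ (-1)), Hg] |].
  intros; simpl; ring.
Qed.

Lemma bpoly_mult m n f g : bpoly m f -> bpoly n g -> bpoly (m + n) (fun p => f p * g p).
Proof.
  intros H; revert n g. induction H; intros n h Hg.
  - apply (bpoly_le n); [lia | now apply bpoly_scal].
  - eapply bpoly_ext; [apply bpoly_mulX, IHbpoly, Hg | intros; simpl; ring].
  - eapply bpoly_ext; [apply bpoly_mulY, IHbpoly, Hg | intros; simpl; ring].
  - eapply bpoly_ext; [apply bpoly_add; [apply IHbpoly1 | apply IHbpoly2]; exact Hg |].
    intros; simpl; ring.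
Qed.

Lemma bpoly_affine a b c : bpoly 1 (fun p => a + b * fst p + c * snd p).
Proof.
  eapply bpoly_ext; [apply bpoly_add; [apply bpoly_add; [apply (bpoly_const 1 a) |] |] |].
  - apply (bpoly_mulX 0 (fun _ => b)), bpoly_const.
  - apply (bpoly_mulY 0 (fun _ => c)), bpoly_const.
  - intros; simpl; ring.
Qed.

Lemma bpoly_pow k g : bpoly 1 g -> bpoly k (fun p => g p ^ k).
Proof.
  intros H. induction k; [exact (bpoly_const 0 1) | simpl; apply (bpoly_mult 1 k); auto].
Qed.

Lemma bpoly_comp_affine k f a1 b1 c1 a2 b2 c2 : bpoly k f ->
  bpoly k (fun p => f (a1 + b1 * fst p + c1 * snd p, a2 + b2 * fst p + c2 * snd p)).
Proof.
  induction 1.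
  - apply bpoly_const.
  - apply (bpoly_mult 1 k (fun p => a1 + b1 * fst p + c1 * snd p)); [apply bpoly_affine | auto].
  - apply (bpoly_mult 1 k (fun p => a2 + b2 * fst p + c2 * snd p)); [apply bpoly_affine | auto].
  - apply bpoly_add; auto.
Qed.

Lemma bpoly_swap k f : bpoly k f -> bpoly k (fun p => f (snd p, fst p)).
Proof. intros H. eapply bpoly_ext; [apply (bpoly_comp_affine k f 0 0 1 0 1 0 H) | intros; pt_eq]. Qed.

Lemma bpoly_line k f a1 d1 a2 d2 : bpoly k f -> upoly k (fun s => f (a1 + s * d1, a2 + s * d2)).
Proof.
  assert (A : forall a d, upoly 1 (fun s => a + s * d))
    by (intros a d; eapply upoly_ext; [apply (upoly_affine a d) | intros; simpl; ring]).
  induction 1.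
  - apply upoly_const.
  - apply (upoly_mult 1 k (fun s => a1 + s * d1)); auto.
  - apply (upoly_mult 1 k (fun s => a2 + s * d2)); auto.
  - apply upoly_add; auto.
Qed.

Lemma bpoly_line_ext k f (g : R -> R) a1 d1 a2 d2 : bpoly k f ->
  (forall s, g s = f (a1 + s * d1, a2 + s * d2)) -> upoly k g.
Proof. intros H E. eapply upoly_ext; [apply (bpoly_line _ _ a1 d1 a2 d2 H) | intros; auto]. Qed.

Lemma bpoly_fst_line k f y : bpoly k f -> upoly k (fun t => f (t, y)).
Proof. intros H. apply (bpoly_line_ext k f _ 0 1 y 0 H). intros; pt_eq. Qed.

Lemma bpoly_snd_line k f x : bpoly k f -> upoly k (fun t => f (x, t)).
Proof. intros H. apply (bpoly_line_ext k f _ x 0 0 1 H). intros; pt_eq. Qed.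

(* [f1], [f2] are the partial derivatives of [f], in the sense that the chain
   rule holds along every line. *)
Definition has_partials (f f1 f2 : pt -> R) := forall a1 d1 a2 d2 s : R,
  is_derive (fun s => f (a1 + s * d1, a2 + s * d2)) s
     (d1 * f1 (a1 + s * d1, a2 + s * d2) + d2 * f2 (a1 + s * d1, a2 + s * d2)).

Lemma is_derive_line (a d s : R) : is_derive (fun s => a + s * d) s d.
Proof. eapply (is_derive_eq (fun s => a + d * s)); [intros; ring | | apply is_derive_affine]. reflexivity. Qed.

Lemma bpoly_has_partials k f : bpoly k f ->
  exists f1 f2, bpoly_lt k f1 /\ bpoly_lt k f2 /\ has_partials f f1 f2.
Proof.
  induction 1 as [k c|k f Hf IH|k f Hf IH|k f g Hf [f1 [f2 [H1 [H2 H3]]]] Hg [g1 [g2 [G1 [G2 G3]]]]].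
  - exists (fun _ => 0), (fun _ => 0). split; [|split]; try (destruct k; simpl; auto; apply bpoly_const).
    intros a1 d1 a2 d2 s. eapply is_derive_eq; [reflexivity | | apply is_derive_Rconst]. ring.
  - destruct IH as [f1 [f2 [H1 [H2 H3]]]].
    exists (fun p => f p + fst p * f1 p), (fun p => fst p * f2 p). split; [|split].
    + simpl. destruct k.
      * eapply bpoly_ext; [apply Hf | intros; simpl in H1; rewrite H1; ring].
      * apply bpoly_add; [exact Hf | now apply bpoly_mulX].
    + simpl. destruct k.
      * eapply bpoly_ext; [apply (bpoly_const 0 0) | intros; simpl in H2; rewrite H2; ring].
      * now apply bpoly_mulX.
    + intros a1 d1 a2 d2 s.
      eapply (is_derive_eq (fun s => (a1 + s * d1) * f (a1 + s * d1, a2 + s * d2)));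
        [reflexivity | | apply is_derive_Rmult; [apply is_derive_line | apply H3]].
      simpl; ring.
  - destruct IH as [f1 [f2 [H1 [H2 H3]]]].
    exists (fun p => snd p * f1 p), (fun p => f p + snd p * f2 p). split; [|split].
    + simpl. destruct k.
      * eapply bpoly_ext; [apply (bpoly_const 0 0) | intros; simpl in H1; rewrite H1; ring].
      * now apply bpoly_mulY.
    + simpl. destruct k.
      * eapply bpoly_ext; [apply Hf | intros; simpl in H2; rewrite H2; ring].
      * apply bpoly_add; [exact Hf | now apply bpoly_mulY].
    + intros a1 d1 a2 d2 s.
      eapply (is_derive_eq (fun s => (a2 + s * d2) * f (a1 + s * d1, a2 + s * d2)));
        [reflexivity | | apply is_derive_Rmult; [apply is_derive_line | apply H3]].
      simpl; ring.
  - exists (fun p => f1 p + g1 p), (fun p => f2 p + g2 p). split; [|split].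
    + destruct k; simpl in *; [intros; rewrite H1, G1; ring | now apply bpoly_add].
    + destruct k; simpl in *; [intros; rewrite H2, G2; ring | now apply bpoly_add].
    + intros a1 d1 a2 d2 s. eapply is_derive_eq; [reflexivity | |
        apply is_derive_Rplus; [apply H3 | apply G3]].
      ring.
Qed.

Lemma has_partials_along f f1 f2 (g : R -> pt) a1 d1 a2 d2 : has_partials f f1 f2 ->
  (forall s, g s = (a1 + s * d1, a2 + s * d2)) ->
  forall s, is_derive (fun s => f (g s)) s (d1 * f1 (g s) + d2 * f2 (g s)).
Proof.
  intros H E s. eapply is_derive_eq; [intros t; rewrite E; reflexivity | rewrite E; reflexivity | apply H].
Qed.

Lemma has_partials_fst f f1 f2 x y : has_partials f f1 f2 ->
  is_derive (fun t => f (t, y)) x (f1 (x, y)).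
Proof.
  intros H. eapply is_derive_eq; [reflexivity | | apply (has_partials_along f f1 f2 _ 0 1 y 0 H)].
  - simpl; ring.
  - intros; pt_eq.
Qed.

Lemma has_partials_snd f f1 f2 x y : has_partials f f1 f2 ->
  is_derive (fun t => f (x, t)) y (f2 (x, y)).
Proof.
  intros H. eapply is_derive_eq; [reflexivity | | apply (has_partials_along f f1 f2 _ x 0 0 1 H)].
  - simpl; ring.
  - intros; pt_eq.
Qed.

Lemma has_partials_mult f f1 f2 g g1 g2 : has_partials f f1 f2 -> has_partials g g1 g2 ->
  has_partials (fun p => f p * g p)
    (fun p => f1 p * g p + f p * g1 p) (fun p => f2 p * g p + f p * g2 p).
Proof.
  intros Hf Hg a1 d1 a2 d2 s.
  eapply is_derive_eq; [reflexivity | | apply is_derive_Rmult; [apply Hf | apply Hg]].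
  cbv beta; ring.
Qed.

Lemma has_partials_comp_affine f f1 f2 a1 b1 c1 a2 b2 c2 : has_partials f f1 f2 ->
  let X p := (a1 + b1 * fst p + c1 * snd p, a2 + b2 * fst p + c2 * snd p) in
  has_partials (fun p => f (X p))
    (fun p => b1 * f1 (X p) + b2 * f2 (X p)) (fun p => c1 * f1 (X p) + c2 * f2 (X p)).
Proof.
  intros Hf X a d1 a' d2 s.
  eapply is_derive_eq; [reflexivity | |
    apply (has_partials_along f f1 f2 (fun s => X (a + s * d1, a' + s * d2))
             (a1 + b1 * a + c1 * a') (b1 * d1 + c1 * d2) (a2 + b2 * a + c2 * a') (b2 * d1 + c2 * d2) Hf)].
  - ring.
  - intros; unfold X; pt_eq.
Qed.

Lemma has_partials_ext f f1 f2 g1 g2 : has_partials f f1 f2 ->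
  (forall p, f1 p = g1 p) -> (forall p, f2 p = g2 p) -> has_partials f g1 g2.
Proof. intros H E1 E2 a1 d1 a2 d2 s. rewrite <- E1, <- E2. apply H. Qed.

Lemma sum_f_R0_zero (F : nat -> R) n : (forall i, (i <= n)%nat -> F i = 0) -> sum_f_R0 F n = 0.
Proof. induction n; intros H; simpl; [apply H; lia | rewrite IHn, H; [ring | lia | intros; apply H; lia]]. Qed.

Lemma sum_f_R0_first (F : nat -> R) n : (forall i, (0 < i)%nat -> F i = 0) -> sum_f_R0 F n = F 0%nat.
Proof. induction n; intros H; simpl; auto. rewrite IHn, (H (S n)); [ring | lia | auto]. Qed.

Lemma sum_f_R0_shift (F : nat -> R) n : sum_f_R0 F (S n) = F 0%nat + sum_f_R0 (fun i => F (S i)) n.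
Proof. rewrite decomp_sum; [reflexivity | lia]. Qed.

Definition poly2_eval k (c : nat -> nat -> R) (x : pt) :=
  sum_f_R0 (fun i => sum_f_R0 (fun j => c i j * fst x ^ i * snd x ^ j) (k - i)) k.

Lemma poly2_const k v : is_poly2 k (fun _ => v).
Proof.
  exists (fun i j => if Nat.eqb i 0 then if Nat.eqb j 0 then v else 0 else 0).
  intros x. rewrite !sum_f_R0_first; [simpl; ring | |].
  - intros [|j] Hj; simpl; [lia | ring].
  - intros [|i] Hi; simpl; [lia |]. apply sum_f_R0_zero. intros; ring.
Qed.

Lemma poly2_add k f g : is_poly2 k f -> is_poly2 k g -> is_poly2 k (fun x => f x + g x).
Proof.
  intros [c Hc] [c' Hc']. exists (fun i j => c i j + c' i j). intros x.
  rewrite Hc, Hc', <- sum_plus. apply sum_eq. intros i _. rewrite <- sum_plus. apply sum_eq. intros; ring.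
Qed.

Lemma poly2_mulX k f : is_poly2 k f -> is_poly2 (S k) (fun x => fst x * f x).
Proof.
  intros [c Hc]. exists (fun i j => match i with O => 0 | S i' => c i' j end). intros x.
  rewrite Hc, sum_f_R0_shift, (sum_f_R0_zero (fun j => 0 * fst x ^ 0 * snd x ^ j)), Rplus_0_l
    by (intros; ring).
  rewrite scal_sum. apply sum_eq. intros i _. simpl (S k - S i)%nat.
  rewrite Rmult_comm, scal_sum. apply sum_eq. intros j _. simpl. ring.
Qed.

Lemma poly2_mulY k f : is_poly2 k f -> is_poly2 (S k) (fun x => snd x * f x).
Proof.
  intros [c Hc]. set (c' := fun i j => match j with O => 0 | S j' => c i j' end).
  exists c'. intros x. rewrite Hc.
  change (snd x * sum_f_R0 (fun i => sum_f_R0 (fun j => c i j * fst x ^ i * snd x ^ j) (k - i)) k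
     = sum_f_R0 (fun i => sum_f_R0 (fun j => c' i j * fst x ^ i * snd x ^ j) (S k - i)) k
     + sum_f_R0 (fun j => c' (S k) j * fst x ^ (S k) * snd x ^ j) (S k - S k)).
  rewrite Nat.sub_diag. simpl (sum_f_R0 _ 0). rewrite Rmult_0_l, Rmult_0_l, Rplus_0_r.
  rewrite scal_sum. apply sum_eq. intros i Hi.
  replace (S k - i)%nat with (S (k - i)) by lia.
  rewrite sum_f_R0_shift. unfold c' at 1. rewrite Rmult_0_l, Rmult_0_l, Rplus_0_l.
  rewrite Rmult_comm, scal_sum. apply sum_eq. intros j _. unfold c'. simpl. ring.
Qed.

Lemma bpoly_poly2 k f : bpoly k f -> is_poly2 k f.
Proof.
  induction 1; [apply poly2_const | now apply poly2_mulX | now apply poly2_mulY | now apply poly2_add].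
Qed.

Lemma bpoly_sum k (F : nat -> pt -> R) n : (forall i, (i <= n)%nat -> bpoly k (F i)) ->
  bpoly k (fun p => sum_f_R0 (fun i => F i p) n).
Proof.
  induction n; intros H; simpl; [apply H; lia |].
  apply bpoly_add; [apply IHn; intros; apply H; lia | apply H; lia].
Qed.

Lemma bpoly_monomial k c i j : (i + j <= k)%nat -> bpoly k (fun p => c * fst p ^ i * snd p ^ j).
Proof.
  intros H. apply (bpoly_le (i + j)); auto.
  eapply bpoly_ext; [apply (bpoly_scal _ c), (bpoly_mult i j) |].
  - apply (bpoly_pow i fst). eapply bpoly_ext; [apply (bpoly_affine 0 1 0) | intros; simpl; ring].
  - apply (bpoly_pow j snd). eapply bpoly_ext; [apply (bpoly_affine 0 0 1) | intros; simpl; ring].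
  - intros; simpl; ring.
Qed.

Lemma poly2_eval_bpoly k c : bpoly k (poly2_eval k c).
Proof. apply bpoly_sum. intros i Hi. apply bpoly_sum. intros j Hj. apply bpoly_monomial. lia. Qed.

Lemma poly2_bpoly k f : is_poly2 k f -> bpoly k f.
Proof. intros [c Hc]. eapply bpoly_ext; [apply (poly2_eval_bpoly k c) | intros; symmetry; apply Hc]. Qed.

(** * Integrals over the reference triangle *)

Lemma is_derive_pow_antider i x : is_derive (fun t => t ^ S i / INR (S i)) x (x ^ i).
Proof.
  assert (HN : INR (S i) <> 0) by (apply not_0_INR; lia).
  apply (is_derive_eq (fun t => / INR (S i) * t ^ S i) _ x (/ INR (S i) * (INR (S i) * 1 * x ^ pred (S i)))).
  - intros; unfold Rdiv; ring.
  - simpl pred; field; auto.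
  - apply is_derive_scal, (is_derive_pow (fun t => t)), is_derive_Rid.
Qed.

Lemma RInt_scal_pow c j u : RInt (fun t => c * t ^ j) 0 u = c * (u ^ S j / INR (S j)).
Proof.
  rewrite (RInt_Rderive (fun t => c * (t ^ S j / INR (S j)))).
  - simpl; unfold Rdiv; ring.
  - intros; apply is_derive_scal, is_derive_pow_antider.
  - intros; eapply upoly_continuous, upoly_scal, upoly_pow.
Qed.

Lemma ex_RInt_reflect (f : R -> R) : ex_RInt f 0 1 -> ex_RInt (fun s => f (1 - s)) 0 1.
Proof.
  intros H.
  assert (H' : ex_RInt f (-1 * 0 + 1) (-1 * 1 + 1))
    by (replace (-1 * 0 + 1) with 1 by ring; replace (-1 * 1 + 1) with 0 by ring;
        now apply ex_RInt_swap).
  apply (ex_RInt_ext (fun y => -1 * (-1 * f (-1 * y + 1)))).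
  - intros. change (-1 * (-1 * f (-1 * x + 1)) = f (1 - x)).
    replace (-1 * x + 1) with (1 - x) by ring. ring.
  - apply (ex_RInt_scal (V := R_CompleteNormedModule) (fun y => -1 * f (-1 * y + 1)) _ _ (-1)),
      (ex_RInt_comp_lin f (-1) 1 0 1 H').
Qed.

Lemma RInt_reflect (f : R -> R) : ex_RInt f 0 1 -> RInt (fun s => f (1 - s)) 0 1 = RInt f 0 1.
Proof.
  intros H.
  assert (H' : ex_RInt f (-1 * 0 + 1) (-1 * 1 + 1))
    by (replace (-1 * 0 + 1) with 1 by ring; replace (-1 * 1 + 1) with 0 by ring;
        now apply ex_RInt_swap).
  assert (E := RInt_comp_lin f (-1) 1 0 1 H').
  replace (-1 * 0 + 1) with 1 in E by ring. replace (-1 * 1 + 1) with 0 in E by ring.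
  rewrite <- (opp_RInt_swap f 0 1 H), (RInt_ext_R _ (fun y => -1 * f (1 - y))), RInt_Rscal in E
    by (try apply ex_RInt_reflect; auto;
        intros; change (-1 * f (-1 * x + 1) = -1 * f (1 - x)); f_equal; f_equal; ring).
  change (-1 * RInt (fun y => f (1 - y)) 0 1 = - RInt f 0 1) in E. lra.
Qed.

Definition ref_int (G : pt -> R) : R := RInt (fun s => RInt (fun t => G (s, t)) 0 (1 - s)) 0 1.

Lemma ex_RInt_bpoly_fst k G t a b : bpoly k G -> ex_RInt (fun s => G (s, t)) a b.
Proof. intros H. eapply upoly_ex_RInt, (bpoly_fst_line k G t H). Qed.

Lemma ex_RInt_bpoly_snd k G s a b : bpoly k G -> ex_RInt (fun t => G (s, t)) a b.
Proof. intros H. eapply upoly_ex_RInt, (bpoly_snd_line k G s H). Qed.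

Lemma bpoly_weight k G i j : bpoly k G -> bpoly (i + j + k) (fun p => fst p ^ i * snd p ^ j * G p).
Proof.
  intros H. apply bpoly_mult; [| exact H].
  eapply bpoly_ext; [apply (bpoly_monomial _ 1 i j); lia | intros; simpl; ring].
Qed.

Lemma ex_RInt_pow_bpoly_snd k G s j a b : bpoly k G -> ex_RInt (fun t => t ^ j * G (s, t)) a b.
Proof.
  intros H. eapply upoly_ex_RInt, upoly_mult; [apply upoly_pow | apply (bpoly_snd_line k G s H)].
Qed.

Lemma upoly_inner_RInt k G : bpoly k G -> forall j, exists n,
  upoly n (fun s => RInt (fun t => t ^ j * G (s, t)) 0 (1 - s)).
Proof.
  induction 1 as [k c|k f Hf IH|k f Hf IH|k f g Hf IHf Hg IHg]; intros j.
  - exists (S j). eapply upoly_ext; [apply (upoly_scal _ (c / INR (S j))), upoly_one_minus_pow |].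
    intros s. rewrite (RInt_ext_R _ (fun t => c * t ^ j)), RInt_scal_pow by (intros; ring).
    unfold Rdiv; ring.
  - destruct (IH j) as [n Hn]. exists (S n). eapply upoly_ext; [apply upoly_mulX, Hn |].
    intros s. cbv beta. rewrite <- RInt_Rscal by (eapply ex_RInt_pow_bpoly_snd, Hf).
    apply RInt_ext_R. intros; simpl; ring.
  - destruct (IH (S j)) as [n Hn]. exists n. eapply upoly_ext; [apply Hn |].
    intros s. apply RInt_ext_R. intros; simpl; ring.
  - destruct (IHf j) as [n1 H1], (IHg j) as [n2 H2]. exists (n1 + n2)%nat.
    eapply upoly_ext; [apply upoly_add; [apply (upoly_le n1) | apply (upoly_le n2)]; eauto; lia |].
    intros s. cbv beta. rewrite <- RInt_Rplus.
    + apply RInt_ext_R. intros; simpl; ring.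
    + eapply ex_RInt_pow_bpoly_snd, Hf.
    + eapply ex_RInt_pow_bpoly_snd, Hg.
Qed.

Lemma upoly_ref_inner k G : bpoly k G -> exists n, upoly n (fun s => RInt (fun t => G (s, t)) 0 (1 - s)).
Proof.
  intros H. destruct (upoly_inner_RInt k G H 0) as [n Hn]. exists n.
  eapply upoly_ext; [apply Hn | intros; apply RInt_ext_R; intros; simpl; ring].
Qed.

Lemma ex_RInt_ref_outer k G : bpoly k G -> ex_RInt (fun s => RInt (fun t => G (s, t)) 0 (1 - s)) 0 1.
Proof. intros H. destruct (upoly_ref_inner k G H) as [n Hn]. eapply upoly_ex_RInt, Hn. Qed.

Lemma ref_int_ext G H : (forall s t, G (s, t) = H (s, t)) -> ref_int G = ref_int H.
Proof. intros E. unfold ref_int. apply RInt_ext_R; intros; apply RInt_ext_R; intros; auto. Qed.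

Lemma ref_int_plus k G H : bpoly k G -> bpoly k H -> ref_int (fun p => G p + H p) = ref_int G + ref_int H.
Proof.
  intros HG HH. unfold ref_int.
  rewrite (RInt_ext_R _ (fun s => RInt (fun t => G (s, t)) 0 (1 - s) + RInt (fun t => H (s, t)) 0 (1 - s))).
  - apply RInt_Rplus; eapply ex_RInt_ref_outer; eauto.
  - intros s. apply RInt_Rplus; eapply ex_RInt_bpoly_snd; eauto.
Qed.

Lemma ref_int_scal k c G : bpoly k G -> ref_int (fun p => c * G p) = c * ref_int G.
Proof.
  intros HG. unfold ref_int.
  rewrite (RInt_ext_R _ (fun s => c * RInt (fun t => G (s, t)) 0 (1 - s))).
  - apply RInt_Rscal; eapply ex_RInt_ref_outer; eauto.
  - intros s. apply RInt_Rscal; eapply ex_RInt_bpoly_snd; eauto.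
Qed.

Definition beta_int i j := RInt (fun s => s ^ i * (1 - s) ^ j) 0 1.

Lemma upoly_beta i j : upoly (i + j) (fun s => s ^ i * (1 - s) ^ j).
Proof. apply upoly_mult; [apply upoly_pow | apply upoly_one_minus_pow]. Qed.

Lemma beta_int_sym i j : beta_int i j = beta_int j i.
Proof.
  unfold beta_int. rewrite <- (RInt_reflect _ (upoly_ex_RInt _ _ _ _ (upoly_beta i j))).
  apply RInt_ext_R. intros; simpl. replace (1 - (1 - x)) with x by ring. ring.
Qed.

Lemma beta_int_rec i j : INR (S i) * beta_int i (S j) = INR (S j) * beta_int (S i) j.
Proof.
  unfold beta_int.
  assert (E : RInt (fun s => INR (S i) * (s ^ i * (1 - s) ^ S j)
                           - INR (S j) * (s ^ S i * (1 - s) ^ j)) 0 1 = 0).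
  { rewrite (RInt_Rderive (fun s => s ^ S i * (1 - s) ^ S j)); [simpl; R_eq; ring | |].
    - intros x. eapply is_derive_eq; [reflexivity | | apply is_derive_Rmult;
        [apply (is_derive_pow (fun t => t) (S i) x 1), is_derive_Rid |
         apply (is_derive_pow (fun t => 1 - t) (S j) x (0 - 1)), is_derive_Rminus;
           [apply is_derive_Rconst | apply is_derive_Rid]]].
      simpl pred. cbv beta. ring.
    - intros x. apply (upoly_continuous (S i + j)), upoly_sub; apply upoly_scal;
        [replace (S i + j)%nat with (i + S j)%nat by lia |]; apply upoly_beta. }
  rewrite RInt_Rminus, !RInt_Rscal in E by
    (eapply upoly_ex_RInt; first [apply upoly_beta | apply upoly_scal, upoly_beta]).
  R_eq; lra.
Qed.

Lemma RInt_tri_monomial c i j :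
  RInt (fun s => RInt (fun t => s ^ i * t ^ j * c) 0 (1 - s)) 0 1 = c / INR (S j) * beta_int i (S j).
Proof.
  unfold beta_int. rewrite <- RInt_Rscal by (eapply upoly_ex_RInt, upoly_beta).
  apply RInt_ext_R. intros s.
  rewrite (RInt_ext_R _ (fun t => (s ^ i * c) * t ^ j)), RInt_scal_pow by (intros; ring).
  unfold Rdiv; ring.
Qed.

Lemma RInt_swap_tri_const c i j :
  RInt (fun s => RInt (fun t => s ^ i * t ^ j * c) 0 (1 - s)) 0 1 =
  RInt (fun t => RInt (fun s => s ^ i * t ^ j * c) 0 (1 - t)) 0 1.
Proof.
  rewrite RInt_tri_monomial, (RInt_ext_R (fun t => RInt (fun s => s ^ i * t ^ j * c) 0 (1 - t))
                                         (fun t => RInt (fun s => t ^ j * s ^ i * c) 0 (1 - t))),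
    RInt_tri_monomial by (intros; apply RInt_ext_R; intros; ring).
  rewrite (beta_int_sym j (S i)).
  assert (HSi : INR (S i) <> 0) by (apply not_0_INR; lia).
  assert (HSj : INR (S j) <> 0) by (apply not_0_INR; lia).
  apply (Rmult_eq_reg_l (INR (S i) * INR (S j))); [| now apply Rmult_integral_contrapositive].
  transitivity (c * (INR (S i) * beta_int i (S j))); [field; auto |].
  rewrite beta_int_rec. field; auto.
Qed.

(* The weights make the statement inductive over [bpoly]; for constants it
   reduces to identities between beta integrals. *)
Lemma RInt_swap_tri_weighted k G : bpoly k G -> forall i j,
  RInt (fun s => RInt (fun t => s ^ i * t ^ j * G (s, t)) 0 (1 - s)) 0 1 =
  RInt (fun t => RInt (fun s => s ^ i * t ^ j * G (s, t)) 0 (1 - t)) 0 1.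
Proof.
  assert (Xs : forall k G i j s, bpoly k G -> ex_RInt (fun t => s ^ i * t ^ j * G (s, t)) 0 (1 - s))
    by (intros; exact (ex_RInt_bpoly_snd _ _ _ _ _ (bpoly_weight _ _ i j H))).
  assert (Xt : forall k G i j t, bpoly k G -> ex_RInt (fun s => s ^ i * t ^ j * G (s, t)) 0 (1 - t))
    by (intros; exact (ex_RInt_bpoly_fst _ _ _ _ _ (bpoly_weight _ _ i j H))).
  assert (Os : forall k G i j, bpoly k G ->
            ex_RInt (fun s => RInt (fun t => s ^ i * t ^ j * G (s, t)) 0 (1 - s)) 0 1)
    by (intros; exact (ex_RInt_ref_outer _ _ (bpoly_weight _ _ i j H))).
  assert (Ot : forall k G i j, bpoly k G ->
            ex_RInt (fun t => RInt (fun s => s ^ i * t ^ j * G (s, t)) 0 (1 - t)) 0 1)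
    by (intros; exact (ex_RInt_ref_outer _ _ (bpoly_swap _ _ (bpoly_weight _ _ i j H)))).
  induction 1 as [k c|k f Hf IH|k f Hf IH|k f g Hf IHf Hg IHg]; intros i j.
  - apply RInt_swap_tri_const.
  - rewrite (RInt_ext_R _ (fun s => RInt (fun t => s ^ S i * t ^ j * f (s, t)) 0 (1 - s)))
      by (intros; apply RInt_ext_R; intros; simpl; ring).
    symmetry; rewrite (RInt_ext_R _ (fun t => RInt (fun s => s ^ S i * t ^ j * f (s, t)) 0 (1 - t)))
      by (intros; apply RInt_ext_R; intros; simpl; ring).
    symmetry; apply IH.
  - rewrite (RInt_ext_R _ (fun s => RInt (fun t => s ^ i * t ^ S j * f (s, t)) 0 (1 - s)))
      by (intros; apply RInt_ext_R; intros; simpl; ring).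
    symmetry; rewrite (RInt_ext_R _ (fun t => RInt (fun s => s ^ i * t ^ S j * f (s, t)) 0 (1 - t)))
      by (intros; apply RInt_ext_R; intros; simpl; ring).
    symmetry; apply IH.
  - rewrite (RInt_ext_R _ (fun s => RInt (fun t => s ^ i * t ^ j * f (s, t)) 0 (1 - s)
                                 + RInt (fun t => s ^ i * t ^ j * g (s, t)) 0 (1 - s))).
    2: { intros s; rewrite <- RInt_Rplus by eauto. apply RInt_ext_R; intros; ring. }
    symmetry.
    rewrite (RInt_ext_R _ (fun t => RInt (fun s => s ^ i * t ^ j * f (s, t)) 0 (1 - t)
                                 + RInt (fun s => s ^ i * t ^ j * g (s, t)) 0 (1 - t))).
    2: { intros t; rewrite <- RInt_Rplus by eauto. apply RInt_ext_R; intros; ring. }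
    rewrite !RInt_Rplus by eauto. now rewrite IHf, IHg.
Qed.

Lemma RInt_swap_tri k G : bpoly k G ->
  RInt (fun s => RInt (fun t => G (s, t)) 0 (1 - s)) 0 1 =
  RInt (fun t => RInt (fun s => G (s, t)) 0 (1 - t)) 0 1.
Proof.
  intros H. assert (E := RInt_swap_tri_weighted k G H 0 0).
  rewrite (RInt_ext_R _ (fun s => RInt (fun t => s ^ 0 * t ^ 0 * G (s, t)) 0 (1 - s))),
          (RInt_ext_R (fun t => RInt (fun s => G (s, t)) 0 (1 - t))
                      (fun t => RInt (fun s => s ^ 0 * t ^ 0 * G (s, t)) 0 (1 - t)))
    by (intros; apply RInt_ext_R; intros; simpl; ring).
  exact E.
Qed.

(* The fundamental theorem of calculus in t, and in s after [RInt_swap_tri]. *)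
Lemma green_ref k (G1 G2 g1 g2 : pt -> R) :
  bpoly k G1 -> bpoly k G2 -> bpoly k g1 -> bpoly k g2 ->
  (forall s t, is_derive (fun u => G1 (u, t)) s (g1 (s, t))) ->
  (forall s t, is_derive (fun u => G2 (s, u)) t (g2 (s, t))) ->
  ref_int (fun p => g1 p + g2 p) =
  RInt (fun s => G1 (s, 1 - s) + G2 (s, 1 - s) - G2 (s, 0)) 0 1 - RInt (fun t => G1 (0, t)) 0 1.
Proof.
  intros HG1 HG2 Hg1 Hg2 D1 D2.
  assert (L : forall G a1 d1 a2 d2, bpoly k G -> ex_RInt (fun s => G (a1 + s * d1, a2 + s * d2)) 0 1)
    by (intros; eapply upoly_ex_RInt, bpoly_line; eauto).
  assert (F1 : RInt (fun s => RInt (fun t => g1 (s, t)) 0 (1 - s)) 0 1 =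
               RInt (fun s => G1 (s, 1 - s)) 0 1 - RInt (fun t => G1 (0, t)) 0 1).
  { rewrite (RInt_swap_tri k g1 Hg1), <- (RInt_reflect (fun s => G1 (s, 1 - s))), <- RInt_Rminus.
    - apply RInt_ext_R. intros t. rewrite (RInt_Rderive (fun u => G1 (u, t))); [| auto |].
      + do 2 f_equal; pt_eq.
      + intros; eapply upoly_continuous, bpoly_fst_line, Hg1.
    - apply (ex_RInt_ext (fun t => G1 (1 + t * -1, 0 + t * 1))); [intros; pt_eq | apply L, HG1].
    - apply (ex_RInt_ext (fun t => G1 (0 + t * 0, 0 + t * 1))); [intros; pt_eq | apply L, HG1].
    - apply (ex_RInt_ext (fun t => G1 (0 + t * 1, 1 + t * -1))); [intros; pt_eq | apply L, HG1]. }
  assert (F2 : RInt (fun s => RInt (fun t => g2 (s, t)) 0 (1 - s)) 0 1 =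
               RInt (fun s => G2 (s, 1 - s) - G2 (s, 0)) 0 1).
  { apply RInt_ext_R. intros s. apply (RInt_Rderive (fun u => G2 (s, u))); [auto |].
    intros; eapply upoly_continuous, bpoly_snd_line, Hg2. }
  unfold ref_int.
  rewrite (RInt_ext_R _ (fun s => RInt (fun t => g1 (s, t)) 0 (1 - s) + RInt (fun t => g2 (s, t)) 0 (1 - s)))
    by (intros; apply RInt_Rplus; eapply ex_RInt_bpoly_snd; eauto).
  rewrite RInt_Rplus, F1, F2 by (eapply ex_RInt_ref_outer; eauto).
  rewrite (RInt_ext_R (fun s => G1 (s, 1 - s) + G2 (s, 1 - s) - G2 (s, 0))
                      (fun s => G1 (s, 1 - s) + (G2 (s, 1 - s) - G2 (s, 0)))) by (intros; ring).
  rewrite RInt_Rplus; [R_eq; ring | |].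
  - apply (ex_RInt_ext (fun t => G1 (0 + t * 1, 1 + t * -1))); [intros; pt_eq | apply L, HG1].
  - apply (ex_RInt_ext (fun s => G2 (0 + s * 1, 1 + s * -1) - G2 (0 + s * 1, 0 + s * 0)));
      [intros; R_eq; f_equal; f_equal; pt_eq | eapply upoly_ex_RInt, upoly_sub; apply bpoly_line, HG2].
Qed.

Lemma ref_int_sqr_eq0 k D : bpoly k D -> ref_int (fun p => D p * D p) = 0 -> forall p, D p = 0.
Proof.
  intros HD E.
  assert (HDD : bpoly (k + k) (fun p => D p * D p)) by (apply bpoly_mult; auto).
  destruct (upoly_ref_inner _ _ HDD) as [n Hn].
  assert (Z : forall s, 0 <= s <= 1 -> RInt (fun t => D (s, t) * D (s, t)) 0 (1 - s) = 0).
  { apply (RInt_nonneg_eq0 _ 0 1); [lra | intros; eapply upoly_continuous, Hn | | exact E].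
    intros s Hs. apply RInt_ge_0; [lra | exact (ex_RInt_bpoly_snd _ _ s _ _ HDD) | intros; nra]. }
  assert (Zs : forall s t, 0 < s < 1/2 -> 0 < t < 1/2 -> D (s, t) = 0).
  { intros s t Hs Ht.
    assert (D (s, t) * D (s, t) = 0); [| nra].
    apply (RInt_nonneg_eq0 (fun t => D (s, t) * D (s, t)) 0 (1 - s)); [lra | | intros; nra | | lra].
    - intros; exact (upoly_continuous _ _ _ (bpoly_snd_line _ _ s HDD)).
    - apply Z; lra. }
  intros [s t].
  assert (Zt : forall t0, 0 < t0 < 1/2 -> forall s, D (s, t0) = 0).
  { intros t0 Ht0. apply (upoly_eq0 k (fun s => D (s, t0)) 0 (1/2)); [apply bpoly_fst_line; auto | lra |].
    intros; apply Zs; auto. }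
  apply (upoly_eq0 k (fun t => D (s, t)) 0 (1/2)); [apply bpoly_snd_line; auto | lra |].
  intros; apply Zt; auto.
Qed.

(** * Green's formula on a triangle *)

Definition tri_map (T : tri2) (p : pt) : pt :=
  padd (tv1 T) (padd (pscal (fst p) (psub (tv2 T) (tv1 T))) (pscal (snd p) (psub (tv3 T) (tv1 T)))).

Lemma tri_int_ref T g : tri_int T g = Rabs (tdet T) * ref_int (fun p => g (tri_map T p)).
Proof. reflexivity. Qed.

Lemma tri_map_surj T : nondegenerate T -> forall p, exists q, tri_map T q = p.
Proof.
  destruct T as [[[x1 y1] [x2 y2]] [x3 y3]].
  unfold nondegenerate, tdet, tri_map, tv1, tv2, tv3, padd, pscal, psub; simpl.
  intros Hd [u v].
  exists (((u - x1) * (y3 - y1) - (v - y1) * (x3 - x1)) / ((x2 - x1) * (y3 - y1) - (y2 - y1) * (x3 - x1)),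
          ((x2 - x1) * (v - y1) - (y2 - y1) * (u - x1)) / ((x2 - x1) * (y3 - y1) - (y2 - y1) * (x3 - x1))).
  simpl. apply (f_equal2 pair); field; auto.
Qed.

Lemma bpoly_comp_tri_map k f T : bpoly k f -> bpoly k (fun p => f (tri_map T p)).
Proof.
  intros H. eapply bpoly_ext;
    [apply (bpoly_comp_affine k f (fst (tv1 T)) (fst (tv2 T) - fst (tv1 T)) (fst (tv3 T) - fst (tv1 T))
                                (snd (tv1 T)) (snd (tv2 T) - snd (tv1 T)) (snd (tv3 T) - snd (tv1 T)) H) |].
  intros; unfold tri_map, padd, pscal, psub; pt_eq.
Qed.

Lemma edge_neq T a b : nondegenerate T -> is_edge T a b -> a <> b.
Proof.
  destruct T as [[[x1 y1] [x2 y2]] [x3 y3]].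
  unfold nondegenerate, tdet, is_edge, psub, tv1, tv2, tv3; simpl.
  intros ND [[-> ->]|[[-> ->]|[-> ->]]] E; inversion E; subst; apply ND; ring.
Qed.

(* Flux of [F] through the segment [a,b] against the normal (b - a) rotated by
   -pi/2, not normalised: it is the outward one when the triangle is
   counterclockwise. *)
Definition edge_flux (a b : pt) (F : pt -> pt) : R :=
  RInt (fun s => pdot (F (padd a (pscal s (psub b a)))) (snd (psub b a), - fst (psub b a))) 0 1.

Lemma edge_int_normal a b F : a <> b ->
  ex_RInt (fun s => pdot (F (padd a (pscal s (psub b a)))) (snd (psub b a), - fst (psub b a))) 0 1 ->
  edge_int a b (fun x => pdot (F x) (edge_normal a b)) = edge_flux a b F.
Proof.
  intros Hab Hex.
  assert (Hn : 0 < pnorm (psub b a)).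
  { apply sqrt_lt_R0. destruct a as [a1 a2], b as [b1 b2]. unfold pdot, psub; simpl.
    destruct (Rle_lt_or_eq_dec 0 ((b1 - a1)² + (b2 - a2)²)) as [Hlt | E];
      [apply Rplus_le_le_0_compat; apply Rle_0_sqr | exact Hlt |].
    destruct (Rplus_sqr_eq_0 _ _ (eq_sym E)). exfalso; apply Hab. f_equal; lra. }
  unfold edge_int, edge_flux, edge_normal.
  rewrite (RInt_ext_R _ (fun s => / pnorm (psub b a) *
    pdot (F (padd a (pscal s (psub b a)))) (snd (psub b a), - fst (psub b a)))), RInt_Rscal by
    (auto; intros; unfold pdot, pscal; simpl; ring).
  field. lra.
Qed.

Lemma bpoly_pdot k (F : pt -> pt) n :
  bpoly k (fun x => fst (F x)) -> bpoly k (fun x => snd (F x)) -> bpoly k (fun x => pdot (F x) n).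
Proof.
  intros H1 H2. unfold pdot.
  eapply bpoly_ext; [apply bpoly_add; [apply (bpoly_scal _ (fst n)), H1 | apply (bpoly_scal _ (snd n)), H2] |].
  intros; simpl; ring.
Qed.

Lemma ex_RInt_edge k (F : pt -> pt) a b n :
  bpoly k (fun x => fst (F x)) -> bpoly k (fun x => snd (F x)) ->
  ex_RInt (fun s => pdot (F (padd a (pscal s (psub b a)))) n) 0 1.
Proof.
  intros H1 H2. eapply upoly_ex_RInt, (bpoly_line_ext _ _ _ (fst a) (fst b - fst a) (snd a) (snd b - snd a)).
  - apply (bpoly_pdot k F n H1 H2).
  - intros; unfold padd, pscal, psub; do 2 f_equal; pt_eq.
Qed.

(* The contravariant Piola transform det(DX) DX^-1 (F o X) of F under the
   affine map X = tri_map T from the reference triangle. *)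
Definition piola (T : tri2) (F : pt -> pt) (p : pt) : pt :=
  let e1 := psub (tv2 T) (tv1 T) in
  let e2 := psub (tv3 T) (tv1 T) in
  let G := F (tri_map T p) in
  (snd e2 * fst G - fst e2 * snd G, fst e1 * snd G - snd e1 * fst G).

Lemma bpoly_piola k T F : bpoly k (fun x => fst (F x)) -> bpoly k (fun x => snd (F x)) ->
  bpoly k (fun p => fst (piola T F p)) /\ bpoly k (fun p => snd (piola T F p)).
Proof.
  intros H1 H2.
  assert (X1 := bpoly_comp_tri_map _ _ T H1). assert (X2 := bpoly_comp_tri_map _ _ T H2).
  split; (eapply bpoly_ext; [apply bpoly_sub | reflexivity]).
  - apply (bpoly_scal _ (snd (psub (tv3 T) (tv1 T))) _ X1).
  - apply (bpoly_scal _ (fst (psub (tv3 T) (tv1 T))) _ X2).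
  - apply (bpoly_scal _ (fst (psub (tv2 T) (tv1 T))) _ X2).
  - apply (bpoly_scal _ (snd (psub (tv2 T) (tv1 T))) _ X1).
Qed.

(* The reference edges (0,0)-(1,0), (1,0)-(0,1) and (0,1)-(0,0) are mapped onto
   the edges of T, with the fluxes preserved. *)
Lemma piola_boundary k T F : bpoly k (fun x => fst (F x)) -> bpoly k (fun x => snd (F x)) ->
  RInt (fun s => fst (piola T F (s, 1 - s)) + snd (piola T F (s, 1 - s)) - snd (piola T F (s, 0))) 0 1
  - RInt (fun t => fst (piola T F (0, t))) 0 1 =
  edge_flux (tv1 T) (tv2 T) F + edge_flux (tv2 T) (tv3 T) F + edge_flux (tv3 T) (tv1 T) F.
Proof.
  intros B1 B2. destruct (bpoly_piola k T F B1 B2) as [BG1 BG2].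
  set (G1 := fun p => fst (piola T F p)) in *. set (G2 := fun p => snd (piola T F p)) in *.
  set (phi := fun a b s => pdot (F (padd a (pscal s (psub b a)))) (snd (psub b a), - fst (psub b a))).
  assert (Hphi : forall a b, ex_RInt (phi a b) 0 1) by (intros; exact (ex_RInt_edge k F _ _ _ B1 B2)).
  destruct T as [[[x1 y1] [x2 y2]] [x3 y3]]. unfold edge_flux, tv1, tv2, tv3; cbn [fst snd].
  fold (phi (x1, y1) (x2, y2)) (phi (x2, y2) (x3, y3)) (phi (x3, y3) (x1, y1)).
  assert (E12 : forall s, G2 (s, 0) = -1 * phi (x1, y1) (x2, y2) s).
  { intros s. unfold G2, piola, phi, pdot.
    replace (tri_map _ (s, 0)) with (padd (x1, y1) (pscal s (psub (x2, y2) (x1, y1))))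
      by (unfold tri_map, padd, pscal, psub; simpl; pt_eq).
    simpl; ring. }
  assert (E23 : forall s, G1 (s, 1 - s) + G2 (s, 1 - s) = phi (x2, y2) (x3, y3) (1 - s)).
  { intros s. unfold G1, G2, piola, phi, pdot.
    replace (tri_map _ (s, 1 - s)) with (padd (x2, y2) (pscal (1 - s) (psub (x3, y3) (x2, y2))))
      by (unfold tri_map, padd, pscal, psub; simpl; pt_eq).
    simpl; ring. }
  assert (E31 : forall t, G1 (0, t) = -1 * phi (x3, y3) (x1, y1) (1 - t)).
  { intros t. unfold G1, piola, phi, pdot.
    replace (tri_map _ (0, t)) with (padd (x3, y3) (pscal (1 - t) (psub (x1, y1) (x3, y3))))
      by (unfold tri_map, padd, pscal, psub; simpl; pt_eq).
    simpl; ring. }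
  rewrite RInt_Rminus, (RInt_ext_R _ _ _ _ E23), (RInt_ext_R _ _ _ _ E12), (RInt_ext_R _ _ _ _ E31),
    (RInt_Rscal _ _ _ _ (Hphi _ _)), (RInt_Rscal _ _ _ _ (ex_RInt_reflect _ (Hphi _ _))),
    !(RInt_reflect _ (Hphi _ _)).
  - R_eq; ring.
  - eapply upoly_ex_RInt, (bpoly_line_ext _ _ _ 0 1 1 (-1) (bpoly_add _ _ _ BG1 BG2)).
    intros s. unfold G1, G2. replace (0 + s * 1, 1 + s * -1) with (s, 1 - s) by pt_eq. reflexivity.
  - eapply upoly_ex_RInt, (bpoly_line_ext _ _ _ 0 1 0 0 BG2).
    intros s. unfold G2. replace (0 + s * 1, 0 + s * 0) with (s, 0) by pt_eq. reflexivity.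
Qed.

(* [green_ref] for [piola T F], whose reference divergence is
   det(DX) (div F) o X. *)
Lemma divergence_tri k T (F : pt -> pt) F11 F12 F21 F22 :
  bpoly k (fun x => fst (F x)) -> bpoly k (fun x => snd (F x)) ->
  bpoly k F11 -> bpoly k F12 -> bpoly k F21 -> bpoly k F22 ->
  has_partials (fun x => fst (F x)) F11 F12 -> has_partials (fun x => snd (F x)) F21 F22 ->
  tdet T * ref_int (fun p => F11 (tri_map T p) + F22 (tri_map T p)) =
  edge_flux (tv1 T) (tv2 T) F + edge_flux (tv2 T) (tv3 T) F + edge_flux (tv3 T) (tv1 T) F.
Proof.
  intros B1 B2 B11 B12 B21 B22 D1 D2.
  rewrite <- (piola_boundary k T F B1 B2). destruct (bpoly_piola k T F B1 B2) as [BG1 BG2].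
  destruct T as [[[x1 y1] [x2 y2]] [x3 y3]].
  set (X := fun p : pt => (x1 + (x2 - x1) * fst p + (x3 - x1) * snd p,
                           y1 + (y2 - y1) * fst p + (y3 - y1) * snd p)).
  assert (EX : forall p, tri_map (x1, y1, (x2, y2), (x3, y3)) p = X p)
    by (intros; unfold X, tri_map, padd, pscal, psub; simpl; pt_eq).
  assert (BX : forall f, bpoly k f -> bpoly k (fun p => f (X p)))
    by (intros; apply bpoly_comp_affine; auto).
  pose proof (has_partials_comp_affine _ _ _ x1 (x2 - x1) (x3 - x1) y1 (y2 - y1) (y3 - y1) D1) as PX1.
  pose proof (has_partials_comp_affine _ _ _ x1 (x2 - x1) (x3 - x1) y1 (y2 - y1) (y3 - y1) D2) as PX2.
  fold X in PX1, PX2. cbv zeta in PX1, PX2.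
  set (g1 := fun p => (y3 - y1) * ((x2 - x1) * F11 (X p) + (y2 - y1) * F12 (X p))
                    - (x3 - x1) * ((x2 - x1) * F21 (X p) + (y2 - y1) * F22 (X p))).
  set (g2 := fun p => (x2 - x1) * ((x3 - x1) * F21 (X p) + (y3 - y1) * F22 (X p))
                    - (y2 - y1) * ((x3 - x1) * F11 (X p) + (y3 - y1) * F12 (X p))).
  rewrite <- (green_ref k _ _ g1 g2 BG1 BG2).
  - rewrite <- (ref_int_scal k) by (apply bpoly_add; apply bpoly_comp_tri_map; auto).
    apply ref_int_ext. intros s t. rewrite EX. unfold g1, g2, tdet, psub; simpl. ring.
  - apply bpoly_sub; apply bpoly_scal; apply bpoly_add; apply bpoly_scal; apply BX; auto.
  - apply bpoly_sub; apply bpoly_scal; apply bpoly_add; apply bpoly_scal; apply BX; auto.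
  - intros s t. unfold piola. simpl fst; simpl snd.
    eapply is_derive_ext; [intros u; rewrite EX; reflexivity |].
    apply is_derive_Rminus; apply is_derive_scal;
      [apply (has_partials_fst _ _ _ s t PX1) | apply (has_partials_fst _ _ _ s t PX2)].
  - intros s t. unfold piola. simpl fst; simpl snd.
    eapply is_derive_ext; [intros u; rewrite EX; reflexivity |].
    apply is_derive_Rminus; apply is_derive_scal;
      [apply (has_partials_snd _ _ _ s t PX2) | apply (has_partials_snd _ _ _ s t PX1)].
Qed.

(** * The Raviart-Thomas interpolant *)

Lemma edge_int_ext a b f g : (forall x, f x = g x) -> edge_int a b f = edge_int a b g.
Proof. intros E. unfold edge_int. f_equal. apply RInt_ext_R. intros; apply E. Qed.

Lemma RT_interp0_edge_flux r T q a b v :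
  nondegenerate T -> is_RT_interp r T q (fun _ => (0, 0)) -> is_edge T a b ->
  bpoly (S r) (fun x => fst (q x)) -> bpoly (S r) (fun x => snd (q x)) -> bpoly r v ->
  edge_flux a b (fun x => pscal (v x) (q x)) = 0.
Proof.
  intros ND [_ [HE _]] Hab H1 H2 Hv.
  rewrite <- edge_int_normal.
  - rewrite <- (HE a b Hab v (bpoly_poly2 _ _ Hv)). apply edge_int_ext. intros x.
    unfold pdot, pscal, psub; cbn [fst snd]; ring.
  - exact (edge_neq T a b ND Hab).
  - apply (ex_RInt_edge (r + S r) (fun x => pscal (v x) (q x))); apply bpoly_mult; auto.
Qed.

Lemma RT_interp0_moment r T q v1 v2 :
  nondegenerate T -> is_RT_interp r T q (fun _ => (0, 0)) -> bpoly_lt r v1 -> bpoly_lt r v2 ->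
  ref_int (fun p => v1 (tri_map T p) * fst (q (tri_map T p)) + v2 (tri_map T p) * snd (q (tri_map T p))) = 0.
Proof.
  intros ND [_ [_ HI]] H1 H2. destruct r as [|r]; simpl in H1, H2.
  - rewrite (ref_int_ext _ (fun p => 0 * 1)) by (intros; rewrite H1, H2; ring).
    transitivity (0 * ref_int (fun _ => 1)); [apply (ref_int_scal 0), bpoly_const | ring].
  - assert (E := HI (fun x => (v1 x, v2 x)) (conj (bpoly_poly2 _ _ H1) (bpoly_poly2 _ _ H2))).
    rewrite tri_int_ref in E.
    apply Rmult_integral in E as [E | E]; [apply Rabs_eq_0 in E; contradiction |].
    rewrite <- E. apply ref_int_ext. intros s t. unfold pdot, psub; cbn [fst snd]; ring.
Qed.

Lemma RT_interp0_div_free r T q q11 q12 q21 q22 :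
  nondegenerate T -> is_RT_interp r T q (fun _ => (0, 0)) ->
  bpoly (S r) (fun x => fst (q x)) -> bpoly (S r) (fun x => snd (q x)) ->
  bpoly r q11 -> bpoly r q12 -> bpoly r q21 -> bpoly r q22 ->
  has_partials (fun x => fst (q x)) q11 q12 -> has_partials (fun x => snd (q x)) q21 q22 ->
  forall p, q11 p + q22 p = 0.
Proof.
  intros ND HRT Hq1 Hq2 H11 H12 H21 H22 P1 P2.
  set (d := fun p => q11 p + q22 p).
  assert (Hd : bpoly r d) by (apply bpoly_add; auto).
  destruct (bpoly_has_partials r d Hd) as [dx [dy [Hdx [Hdy Pd]]]].
  set (k := (r + S r)%nat).
  assert (Bk : forall f g, bpoly r f -> bpoly (S r) g -> bpoly k (fun p => f p * g p))
    by (intros; apply bpoly_mult; auto).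
  assert (Bk' : forall f g, bpoly r f -> bpoly r g -> bpoly k (fun p => f p * g p))
    by (intros; apply (bpoly_le (r + r)); [unfold k; lia | apply bpoly_mult; auto]).
  assert (Bx : bpoly r dx) by (apply bpoly_lt_bpoly; auto).
  assert (By : bpoly r dy) by (apply bpoly_lt_bpoly; auto).
  (* div (d q) = d^2 + grad d . q, whose boundary and interior moments vanish. *)
  assert (DT := divergence_tri k T (fun x => pscal (d x) (q x))
    (fun p => dx p * fst (q p) + d p * q11 p) (fun p => dy p * fst (q p) + d p * q12 p)
    (fun p => dx p * snd (q p) + d p * q21 p) (fun p => dy p * snd (q p) + d p * q22 p)
    (Bk _ _ Hd Hq1) (Bk _ _ Hd Hq2)
    (bpoly_add _ _ _ (Bk _ _ Bx Hq1) (Bk' _ _ Hd H11)) (bpoly_add _ _ _ (Bk _ _ By Hq1) (Bk' _ _ Hd H12))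
    (bpoly_add _ _ _ (Bk _ _ Bx Hq2) (Bk' _ _ Hd H21)) (bpoly_add _ _ _ (Bk _ _ By Hq2) (Bk' _ _ Hd H22))
    (has_partials_mult _ _ _ _ _ _ Pd P1) (has_partials_mult _ _ _ _ _ _ Pd P2)).
  rewrite !(RT_interp0_edge_flux r T q) in DT; auto; try (red; tauto).
  assert (BX : forall f, bpoly k f -> bpoly k (fun p => f (tri_map T p)))
    by (intros; apply bpoly_comp_tri_map; auto).
  assert (M := RT_interp0_moment r T q dx dy ND HRT Hdx Hdy).
  assert (Z : ref_int (fun p => d (tri_map T p) * d (tri_map T p)) = 0).
  { rewrite (ref_int_ext _ (fun p => d (tri_map T p) * d (tri_map T p)
        + (dx (tri_map T p) * fst (q (tri_map T p)) + dy (tri_map T p) * snd (q (tri_map T p))))),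
      (ref_int_plus k) in DT.
    - rewrite M, Rplus_0_r, !Rplus_0_l in DT.
      apply Rmult_integral in DT as [E | E]; [contradiction | exact E].
    - apply (BX (fun x => d x * d x)), Bk'; auto.
    - apply (BX (fun x => dx x * fst (q x) + dy x * snd (q x))), bpoly_add; apply Bk; auto.
    - intros; unfold d; ring. }
  intros p. destruct (tri_map_surj T ND p) as [p' <-].
  exact (ref_int_sqr_eq0 _ _ (bpoly_comp_tri_map _ _ T Hd) Z p').
Qed.

(** * The stream function *)

Lemma is_derive_sum (F : nat -> R -> R) (F' : nat -> R) n x :
  (forall i, (i <= n)%nat -> is_derive (F i) x (F' i)) ->
  is_derive (fun t => sum_f_R0 (fun i => F i t) n) x (sum_f_R0 F' n).
Proof.
  induction n; intros H; simpl; [apply H; lia |].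
  apply is_derive_Rplus; [apply IHn; intros; apply H; lia | apply H; lia].
Qed.

Lemma ex_RInt_sum (F : nat -> R -> R) n a b :
  (forall i, (i <= n)%nat -> ex_RInt (F i) a b) -> ex_RInt (fun t => sum_f_R0 (fun i => F i t) n) a b.
Proof.
  induction n; intros H; simpl.
  - apply H; lia.
  - apply ex_RInt_Rplus; [apply IHn; intros; apply H; lia | apply H; lia].
Qed.

Lemma RInt_sum (F : nat -> R -> R) n a b : (forall i, (i <= n)%nat -> ex_RInt (F i) a b) ->
  RInt (fun t => sum_f_R0 (fun i => F i t) n) a b = sum_f_R0 (fun i => RInt (F i) a b) n.
Proof.
  induction n; intros H; simpl; [reflexivity |].
  rewrite RInt_Rplus, IHn; [reflexivity | intros; apply H; lia | | apply H; lia].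
  apply ex_RInt_sum. intros; apply H; lia.
Qed.

Definition poly2_dy k (c : nat -> nat -> R) (p : pt) :=
  sum_f_R0 (fun i => sum_f_R0 (fun j => c i j * fst p ^ i * (INR j * snd p ^ pred j)) (k - i)) k.

Definition poly2_prim k (c : nat -> nat -> R) (p : pt) :=
  sum_f_R0 (fun i => sum_f_R0 (fun j => c i j * (fst p ^ S i / INR (S i)) * snd p ^ j) (k - i)) k.

Lemma bpoly_poly2_prim k c : bpoly (S k) (poly2_prim k c).
Proof.
  apply bpoly_sum. intros i Hi. apply bpoly_sum. intros j Hj. eapply bpoly_ext.
  - apply (bpoly_monomial _ (c i j / INR (S i)) (S i) j). lia.
  - intros; simpl; unfold Rdiv; ring.
Qed.

Lemma is_derive_poly2_eval_snd k c x y :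
  is_derive (fun t => poly2_eval k c (x, t)) y (poly2_dy k c (x, y)).
Proof.
  apply is_derive_sum. intros i _. apply is_derive_sum. intros j _.
  apply (is_derive_eq (fun t => (c i j * x ^ i) * t ^ j) _ y ((c i j * x ^ i) * (INR j * 1 * y ^ pred j)));
    [intros; simpl; ring | simpl; ring | apply is_derive_scal, (is_derive_pow (fun t => t)), is_derive_Rid].
Qed.

Lemma is_derive_poly2_prim_fst k c x y :
  is_derive (fun t => poly2_prim k c (t, y)) x (poly2_eval k c (x, y)).
Proof.
  apply is_derive_sum. intros i _. apply is_derive_sum. intros j _.
  apply (is_derive_eq (fun t => (c i j * y ^ j) * (t ^ S i / INR (S i))) _ x ((c i j * y ^ j) * x ^ i));
    [intros; simpl; ring | simpl; ring | apply is_derive_scal, is_derive_pow_antider].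
Qed.

Lemma is_derive_poly2_prim_snd k c x y :
  is_derive (fun t => poly2_prim k c (x, t)) y (RInt (fun t => poly2_dy k c (t, y)) 0 x).
Proof.
  assert (X : forall i j, ex_RInt (fun t => c i j * t ^ i * (INR j * y ^ pred j)) 0 x).
  { intros. eapply upoly_ex_RInt, upoly_ext;
      [apply (upoly_scal _ (c i j * (INR j * y ^ pred j))), (upoly_pow i) | intros; simpl; ring]. }
  unfold poly2_dy. simpl fst; simpl snd.
  rewrite RInt_sum by (intros; apply ex_RInt_sum; auto).
  apply is_derive_sum. intros i _. rewrite RInt_sum by auto. apply is_derive_sum. intros j _.
  rewrite (RInt_ext_R _ (fun t => (c i j * (INR j * y ^ pred j)) * t ^ i)), RInt_scal_pow by (intros; ring).
  apply (is_derive_eq (fun t => (c i j * (x ^ S i / INR (S i))) * t ^ j) _ y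
           ((c i j * (x ^ S i / INR (S i))) * (INR j * 1 * y ^ pred j)));
    [intros; simpl; ring | simpl; ring | apply is_derive_scal, (is_derive_pow (fun t => t)), is_derive_Rid].
Qed.

Lemma poly2_eval_x0 k a y : poly2_eval k a (0, y) = sum_f_R0 (fun j => a 0%nat j * y ^ j) k.
Proof.
  unfold poly2_eval. destruct k as [|k]; [simpl; ring |].
  rewrite sum_f_R0_shift, (sum_f_R0_zero (fun i => sum_f_R0 _ _)), Rplus_0_r.
  - apply sum_eq. intros; simpl; ring.
  - intros i Hi. apply sum_f_R0_zero. intros; simpl; ring.
Qed.

Lemma has_partials_poly2_snd k c f f1 f2 : (forall x, f x = poly2_eval k c x) ->
  has_partials f f1 f2 -> forall p, f2 p = poly2_dy k c p.
Proof.
  intros E H [x y].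
  apply (is_derive_unique_R (fun u => f (x, u)) y); [apply (has_partials_snd _ _ _ x y H) |].
  apply (is_derive_ext (fun u => poly2_eval k c (x, u))); [intros; now rewrite E |].
  apply is_derive_poly2_eval_snd.
Qed.

Lemma bpoly_has_partials_axes k w g1 g2 : bpoly k w ->
  (forall x y, is_derive (fun t => w (t, y)) x (g1 (x, y))) ->
  (forall x y, is_derive (fun t => w (x, t)) y (g2 (x, y))) -> has_partials w g1 g2.
Proof.
  intros Bw D1 D2. destruct (bpoly_has_partials _ _ Bw) as [w1 [w2 [_ [_ Pw]]]].
  apply (has_partials_ext w w1 w2 _ _ Pw); intros [x y].
  - apply (is_derive_unique_R (fun t => w (t, y)) x); [apply (has_partials_fst _ _ _ x y Pw) | apply D1].
  - apply (is_derive_unique_R (fun t => w (x, t)) y); [apply (has_partials_snd _ _ _ x y Pw) | apply D2].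
Qed.

Lemma div_free_potential k q q11 q12 q21 q22 :
  is_poly2 k (fun x => fst (q x)) -> is_poly2 k (fun x => snd (q x)) -> bpoly k q11 ->
  has_partials (fun x => fst (q x)) q11 q12 -> has_partials (fun x => snd (q x)) q21 q22 ->
  (forall p, q11 p + q22 p = 0) ->
  exists w, bpoly (S k) w /\ has_partials w (fun x => snd (q x)) (fun x => - fst (q x)).
Proof.
  intros [a Ha] [b Hb] B11 P1 P2 Hdiv.
  (* w(x,y) = int_0^x q2(t,y) dt - int_0^y q1(0,t) dt *)
  set (w := fun p => poly2_prim k b p - sum_f_R0 (fun j => a 0%nat j * (snd p ^ S j / INR (S j))) k).
  assert (Bw : bpoly (S k) w).
  { apply bpoly_sub; [apply bpoly_poly2_prim |]. apply bpoly_sum. intros j Hj. eapply bpoly_ext.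
    - apply (bpoly_monomial _ (a 0%nat j / INR (S j)) 0 (S j)). lia.
    - intros; simpl; unfold Rdiv; ring. }
  exists w. split; [exact Bw |]. apply (bpoly_has_partials_axes (S k)); [exact Bw | intros x y ..].
  - rewrite Hb.
    apply (is_derive_eq (fun t => poly2_prim k b (t, y)
                          - sum_f_R0 (fun j => a 0%nat j * (y ^ S j / INR (S j))) k) _ x
                        (poly2_eval k b (x, y) - 0)); [intros; reflexivity | apply Rminus_0_r |].
    apply is_derive_Rminus; [apply is_derive_poly2_prim_fst | apply is_derive_Rconst].
  - assert (E22 : forall t, poly2_dy k b (t, y) = -1 * q11 (t, y)).
    { intros t. rewrite <- (has_partials_poly2_snd k b _ _ _ Hb P2). specialize (Hdiv (t, y)). lra. }
    assert (I11 : RInt (fun t => q11 (t, y)) 0 x = fst (q (x, y)) - fst (q (0, y))).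
    { apply (RInt_Rderive (fun t => fst (q (t, y)))); intros t.
      - apply (has_partials_fst _ _ _ _ _ P1).
      - eapply upoly_continuous, bpoly_fst_line, B11. }
    apply (is_derive_eq (fun t => poly2_prim k b (x, t)
                          - sum_f_R0 (fun j => a 0%nat j * (t ^ S j / INR (S j))) k) _ y
             (RInt (fun t => poly2_dy k b (t, y)) 0 x - sum_f_R0 (fun j => a 0%nat j * y ^ j) k));
      [intros; reflexivity | |].
    + rewrite (RInt_ext_R _ _ _ _ E22), RInt_Rscal, I11 by (eapply upoly_ex_RInt, bpoly_fst_line, B11).
      rewrite <- poly2_eval_x0. unfold poly2_eval. rewrite <- Ha.
      change (AbsRing.sort R_AbsRing) with R. ring.
    + apply is_derive_Rminus; [apply is_derive_poly2_prim_snd |].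
      apply is_derive_sum. intros j _. apply is_derive_scal, is_derive_pow_antider.
Qed.

Lemma gradperp_has_partials f f1 f2 x : has_partials f f1 f2 -> gradperp f x = (- f2 x, f1 x).
Proof.
  intros H. destruct x as [x y]. unfold gradperp; simpl.
  replace (Derive (fun t => f (x, t)) y) with (f2 (x, y))
    by (symmetry; apply is_derive_unique, (has_partials_snd _ _ _ x y H)).
  replace (Derive (fun t => f (t, y)) x) with (f1 (x, y))
    by (symmetry; apply is_derive_unique, (has_partials_fst _ _ _ x y H)).
  reflexivity.
Qed.

Lemma has_partials_sub_const f f1 f2 c : has_partials f f1 f2 -> has_partials (fun p => f p - c) f1 f2.
Proof.
  intros H a1 d1 a2 d2 s.
  eapply is_derive_eq; [reflexivity | | apply is_derive_Rminus; [apply H | apply is_derive_Rconst]].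
  ring.
Qed.

(* Along an edge, q.n is the tangential derivative of the stream function w,
   so the vanishing edge moments say that this derivative is orthogonal to
   P_r; testing with ((x - a).(b - a) / |b - a|^2)^m, which is s^m on the edge. *)
Lemma RT_interp0_edge_lobatto r T q w a b :
  nondegenerate T -> is_RT_interp r T q (fun _ => (0, 0)) -> is_edge T a b ->
  bpoly (S r) (fun x => fst (q x)) -> bpoly (S r) (fun x => snd (q x)) ->
  bpoly (r + 2) w -> has_partials w (fun x => snd (q x)) (fun x => - fst (q x)) ->
  exists c, forall s, w (padd a (pscal s (psub b a))) = w a + c * lobatto_poly r s.
Proof.
  intros ND HRT Hab Hq1 Hq2 Hw Pw.
  assert (Hne := edge_neq T a b ND Hab).
  destruct a as [a1 a2], b as [b1 b2]. unfold padd, pscal, psub; simpl.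
  set (D := (b1 - a1) * (b1 - a1) + (b2 - a2) * (b2 - a2)).
  assert (HD : D <> 0).
  { intros E. apply Hne. destruct (Rplus_sqr_eq_0 (b1 - a1) (b2 - a2) E). f_equal; lra. }
  set (phi := fun s => w (a1 + s * (b1 - a1), a2 + s * (b2 - a2))).
  set (phi1 := fun s => (b1 - a1) * snd (q (a1 + s * (b1 - a1), a2 + s * (b2 - a2)))
                      + (b2 - a2) * - fst (q (a1 + s * (b1 - a1), a2 + s * (b2 - a2)))).
  assert (Orth : forall m, (m <= r)%nat -> RInt (fun s => phi1 s * s ^ m) 0 1 = 0).
  { intros m Hm.
    set (v := fun x : pt => (((fst x - a1) * (b1 - a1) + (snd x - a2) * (b2 - a2)) / D) ^ m).
    assert (Bv : bpoly r v).
    { apply (bpoly_le m); auto.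
      apply (bpoly_pow m (fun x => ((fst x - a1) * (b1 - a1) + (snd x - a2) * (b2 - a2)) / D)).
      eapply bpoly_ext; [apply (bpoly_affine (- (a1 * (b1 - a1) + a2 * (b2 - a2)) / D)
                                             ((b1 - a1) / D) ((b2 - a2) / D)) |].
      intros; cbv beta; field; auto. }
    assert (E := RT_interp0_edge_flux r T q (a1, a2) (b1, b2) v ND HRT Hab Hq1 Hq2 Bv).
    unfold edge_flux in E.
    match type of E with RInt ?f 0 1 = 0 => transitivity (-1 * RInt f 0 1); [| rewrite E; R_eq; ring] end.
    rewrite <- RInt_Rscal
      by (apply (ex_RInt_edge (r + S r) (fun x => pscal (v x) (q x))); apply bpoly_mult; auto).
    apply RInt_ext_R. intros s. unfold phi1, v, padd, pscal, psub, pdot; simpl.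
    replace (((a1 + s * (b1 - a1) - a1) * (b1 - a1) + (a2 + s * (b2 - a2) - a2) * (b2 - a2)) / D) with s
      by (unfold D; field; auto).
    ring. }
  destruct (deriv_orth_lobatto r phi phi1) as [c Hc]; [| intros s; apply Pw | exact Orth |].
  - apply bpoly_line, Hw.
  - exists c. intros s. change (phi s = w (a1, a2) + c * lobatto_poly r s). rewrite Hc.
    unfold phi. do 3 f_equal; ring.
Qed.

Lemma lobatto_points_vanish r T w z :
  is_vertex z T -> w z = 0 ->
  (forall a b, is_edge T a b ->
     exists c, forall s, w (padd a (pscal s (psub b a))) = w a + c * lobatto_poly r s) ->
  forall a b, is_edge T a b -> forall l, lobatto_point r a b l -> w l = 0.
Proof.
  intros Hz Wz EC a b Hedge l [s [Hs ->]].
  assert (V : forall e1 e2, is_edge T e1 e2 -> w e2 = w e1).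
  { intros e1 e2 He. destruct (EC e1 e2 He) as [c Hc]. specialize (Hc 1).
    rewrite lobatto_poly_1 in Hc. replace (padd e1 (pscal 1 (psub e2 e1))) with e2 in Hc; [lra |].
    destruct e1, e2. unfold padd, pscal, psub; pt_eq. }
  assert (V12 := V _ _ (or_introl (conj eq_refl eq_refl))).
  assert (V23 := V _ _ (or_intror (or_introl (conj eq_refl eq_refl)))).
  assert (Wv : w (tv1 T) = 0 /\ w (tv2 T) = 0 /\ w (tv3 T) = 0)
    by (destruct Hz as [E|[E|E]]; rewrite <- E in *; lra).
  destruct (EC a b Hedge) as [c Hc]. rewrite Hc, Hs.
  destruct Hedge as [[-> _]|[[-> _]|[-> _]]]; lra.
Qed.

Theorem lemma4p2 (Th : list tri2) (z : pt) (r : nat) (q : pt -> pt) :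
  triangulation Th ->
  (exists T, In T Th /\ is_vertex z T) ->
  is_poly2_vec (r + 1) q ->
  (forall T, In T Th -> is_vertex z T -> is_RT_interp r T q (fun _ => (0, 0))) ->
  exists w : pt -> R,
    is_poly2 (r + 2) w /\
    (forall x, q x = gradperp w x) /\
    (forall T, In T Th -> is_vertex z T ->
       forall a b, is_edge T a b ->
       forall l, lobatto_point r a b l -> w l = 0).
Proof.
  intros [Hnd _] [T0 [HT0 Hz0]] [Hq1 Hq2] HRT.
  replace (r + 1)%nat with (S r) in Hq1, Hq2 by lia.
  assert (B1 := poly2_bpoly _ _ Hq1). assert (B2 := poly2_bpoly _ _ Hq2).
  destruct (bpoly_has_partials _ _ B1) as [q11 [q12 [H11 [H12 P1]]]].
  destruct (bpoly_has_partials _ _ B2) as [q21 [q22 [H21 [H22 P2]]]].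
  assert (Hdiv := RT_interp0_div_free r T0 q q11 q12 q21 q22 (Hnd T0 HT0) (HRT T0 HT0 Hz0)
                    B1 B2 H11 H12 H21 H22 P1 P2).
  destruct (div_free_potential (S r) q q11 q12 q21 q22 Hq1 Hq2 (bpoly_S _ _ H11) P1 P2 Hdiv)
    as [w0 [Bw0 Pw0]].
  set (w := fun x => w0 x - w0 z).
  assert (Bw : bpoly (r + 2) w)
    by (replace (r + 2)%nat with (S (S r)) by lia; apply bpoly_sub, bpoly_const; exact Bw0).
  assert (Pw := has_partials_sub_const _ _ _ (w0 z) Pw0).
  exists w. split; [|split].
  - now apply bpoly_poly2.
  - intros x. unfold w. rewrite (gradperp_has_partials _ _ _ x Pw), Ropp_involutive. now destruct (q x).
  - intros T HT HzT. apply (lobatto_points_vanish r T w z HzT); [unfold w; ring |].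
    intros a b Hab. eapply RT_interp0_edge_lobatto; eauto.
Qed.
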